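(* Let $f \in \mathcal{C}_{2\pi}$, let $A_n[f]$ be the Toeplitz matrix generated by $f$ and $c_n[f]$ the optimal circulant preconditioner for $A_n[f]$. Assume that $\sin c_n[f]$ is invertible for every $n$ and that there is a constant $C$ with $\|(\sin c_n[f])^{-1}\|_2\le C$ for all $n$. Then for every $\epsilon>0$ there exist positive integers $N$ and $M$ such that for every $n>N$ there are matrices $\widehat{\mathcal R}_n[f],\widehat{\mathcal E}_n[f]\in\mathbb{C}^{n\times n}$ with \[ (\sin c_n[f])^{-1}\sin A_n[f] = I_n+\widehat{\mathcal R}_n[f]+\widehat{\mathcal E}_n[f],\qquad \operatorname{rank}\widehat{\mathcal R}_n[f]\le 2M,\qquad \|\widehat{\mathcal E}_n[f]\|_2\le\epsilon. \]
   Context: $\mathcal{C}_{2\pi}$ denotes the Banach space of all $2\pi$-periodic continuous complex-valued functions on $\mathbb{R}$ with the supremum norm $\|\cdot\|_\infty$. For $f\in\mathcal{C}_{2\pi}$ its Fourier coefficients are $a_k=\frac{1}{2\pi}\int_{-\pi}^{\pi} f(\theta)e^{-\mathbf{i}k\theta}\,d\theta$, $k\in\mathbb{Z}$. The Toeplitz matrix generated by $f$ is the $n\times n$ matrix $A_n[f]$ whose $(j,k)$ entry is $a_{j-k}$. The optimal circulant preconditioner $c_n[f]$ is the $n\times n$ circulant matrix whose $(j,k)$ entry is $c_{(j-k)\bmod n}$, where $c_k=\frac{(n-k)a_k+k\,a_{k-n}}{n}$ for $0\le k<n$. For a square matrix $X$, $\sin X=\sum_{m\ge0}\frac{(-1)^m}{(2m+1)!}X^{2m+1}$.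 $I_n$ is the $n\times n$ identity and $\|\cdot\|_2$ is the spectral norm. *)

From Stdlib Require Import Reals Lra Lia ZArith List Classical ClassicalEpsilon.
Open Scope R_scope.

Definition Cx : Type := (R * R)%type.
Definition C0 : Cx := (0, 0).
Definition C1 : Cx := (1, 0).
Definition RtoC (x : R) : Cx := (x, 0).
Definition Cadd (z w : Cx) : Cx := (fst z + fst w, snd z + snd w).
Definition Cmul (z w : Cx) : Cx :=
  (fst z * fst w - snd z * snd w, fst z * snd w + snd z * fst w).
Definition Cscale (r : R) (z : Cx) : Cx := (r * fst z, r * snd z).
Definition Cnorm2 (z : Cx) : R := fst z * fst z + snd z * snd z.
Definition Cexpi (t : R) : Cx := (cos t, sin t).

Fixpoint Csum (n : nat) (g : nat -> Cx) : Cx :=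
  match n with
  | O => C0
  | S m => Cadd (Csum m g) (g m)
  end.

Definition Ccv (u : nat -> Cx) (l : Cx) : Prop :=
  Un_cv (fun k => fst (u k)) (fst l) /\ Un_cv (fun k => snd (u k)) (snd l).
Definition Clim (u : nat -> Cx) : Cx := epsilon (inhabits C0) (Ccv u).

Definition in_C2pi (f : R -> Cx) : Prop :=
  (forall x, f (x + 2 * PI) = f x) /\
  continuity (fun x => fst (f x)) /\ continuity (fun x => snd (f x)).

(* Riemann integral of a real function on [a,b] (well defined when integrable) *)
Definition Rint (g : R -> R) (a b : R) : R :=
  epsilon (inhabits 0) (fun l => exists pr : Riemann_integrable g a b, RiemannInt pr = l).

Definition fourier (f : R -> Cx) (k : Z) : Cx :=
  let h := fun t => Cmul (f t) (Cexpi (- IZR k * t)) in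
  Cscale (/ (2 * PI)) (Rint (fun t => fst (h t)) (- PI) PI,
                       Rint (fun t => snd (h t)) (- PI) PI).

(* ---------- n x n matrices as nat -> nat -> Cx (only indices < n matter) ---------- *)
Definition mat := nat -> nat -> Cx.
Definition vec := nat -> Cx.

Definition mat_eq (n : nat) (X Y : mat) : Prop :=
  forall j k, (j < n)%nat -> (k < n)%nat -> X j k = Y j k.
Definition mid : mat := fun j k => if Nat.eqb j k then C1 else C0.
Definition madd (X Y : mat) : mat := fun j k => Cadd (X j k) (Y j k).
Definition mscale (r : R) (X : mat) : mat := fun j k => Cscale r (X j k).
Definition mmul (n : nat) (X Y : mat) : mat :=
  fun j k => Csum n (fun l => Cmul (X j l) (Y l k)).
Fixpoint mpow (n : nat) (X : mat) (m : nat) : mat :=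
  match m with
  | O => mid
  | S p => mmul n X (mpow n X p)
  end.
Definition msum (K : nat) (F : nat -> mat) : mat :=
  fun j k => Csum K (fun m => F m j k).

Definition msin (n : nat) (X : mat) : mat :=
  fun j k => Clim (fun K =>
    msum K (fun m => mscale ((-1) ^ m / INR (fact (2 * m + 1)))
                            (mpow n X (2 * m + 1))) j k).

Definition toeplitz (f : R -> Cx) (n : nat) : mat :=
  fun j k => fourier f (Z.of_nat j - Z.of_nat k).

Definition opt_circ_coef (f : R -> Cx) (n : nat) (k : Z) : Cx :=
  Cscale (/ INR n)
    (Cadd (Cscale (INR n - IZR k) (fourier f k))
          (Cscale (IZR k) (fourier f (k - Z.of_nat n)))).
Definition opt_circ (f : R -> Cx) (n : nat) : mat :=
  fun j k => opt_circ_coef f n (Z.modulo (Z.of_nat j - Z.of_nat k) (Z.of_nat n)).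

Definition is_inverse (n : nat) (S B : mat) : Prop :=
  mat_eq n (mmul n B S) mid /\ mat_eq n (mmul n S B) mid.

Definition vnorm (n : nat) (x : vec) : R :=
  sqrt (fst (Csum n (fun j => RtoC (Cnorm2 (x j))))).
Definition matvec (n : nat) (X : mat) (x : vec) : vec :=
  fun j => Csum n (fun k => Cmul (X j k) (x k)).
Definition opnorm_le (n : nat) (X : mat) (c : R) : Prop :=
  forall x : vec, vnorm n (matvec n X x) <= c * vnorm n x.

(* rank = dimension of the column space over C = max number of linearly
   independent columns; rank X <= r *)
Definition cols_lin_indep (n : nat) (X : mat) (cols : list nat) : Prop :=
  forall alpha : nat -> Cx,
    (forall j, (j < n)%nat ->
       Csum (length cols) (fun i => Cmul (alpha i) (X j (nth i cols O))) = C0) ->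
    forall i, (i < length cols)%nat -> alpha i = C0.
Definition rank_le (n : nat) (X : mat) (r : nat) : Prop :=
  forall cols : list nat, NoDup cols -> Forall (fun c => (c < n)%nat) cols ->
    cols_lin_indep n X cols -> (length cols <= r)%nat.

(* Write f = p + g with p a Fejer mean of f, a trigonometric polynomial, and g uniformly small.
   For a single exponential b e^{ikt}, A_n - c_n is a matrix of rank at most |k| plus a matrix
   of norm |k| |b| / n, so A_n[p] - c_n[p] = low rank + O(1/n). Both ||A_n[g]|| and ||c_n[g]||
   are at most sup |g|: the first through the quadratic form (1/2 pi) int g conj(Y) X of the
   trigonometric polynomials X, Y of the two vectors and Parseval, the second because c_n[g] is
   an average of cyclic rotations of A_n[g]. Hence A_n[f] - c_n[f] = low rank + small for large n.
   Since X^q - Y^q = X (X^(q-1) - Y^(q-1)) + (X - Y) Y^(q-1), such a splitting propagates to the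
   partial sums of the sine series, whose tails are uniformly small because ||A_n[f]|| and
   ||c_n[f]|| are at most sup |f|. Multiplying sin A_n[f] - sin c_n[f] = R + E on the left by
   (sin c_n[f])^-1, of norm at most C, gives the theorem. *)

From Stdlib Require Import Reals Lra Lia ZArith List Classical ClassicalEpsilon FunctionalExtensionality.
From Coquelicot Require Import Hierarchy RInt RInt_analysis Continuity AutoDerive.
Open Scope R_scope.

Definition Cconj (z : Cx) : Cx := (fst z, - snd z).
Definition Copp (z : Cx) : Cx := (- fst z, - snd z).
Definition Cabs (z : Cx) : R := sqrt (Cnorm2 z).

Lemma Cpair_eq (z w : Cx) : fst z = fst w -> snd z = snd w -> z = w.
Proof. destruct z, w; simpl; intros; subst; reflexivity. Qed.
Ltac cx_expand := repeat match goal with z : Cx |- _ => destruct z end;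
  unfold Cadd, Cmul, Cscale, C0, C1, RtoC, Cconj, Copp, Cnorm2 in *; simpl in *.
Ltac cx_ring := cx_expand; apply Cpair_eq; simpl; ring.

Lemma Cadd_comm z w : Cadd z w = Cadd w z. Proof. cx_ring. Qed.
Lemma Cadd_assoc z w u : Cadd (Cadd z w) u = Cadd z (Cadd w u). Proof. cx_ring. Qed.
Lemma Cadd_0_l z : Cadd C0 z = z. Proof. cx_ring. Qed.
Lemma Cadd_0_r z : Cadd z C0 = z. Proof. cx_ring. Qed.
Lemma Cmul_assoc z w u : Cmul (Cmul z w) u = Cmul z (Cmul w u). Proof. cx_ring. Qed.
Lemma Cmul_0_r z : Cmul z C0 = C0. Proof. cx_ring. Qed.
Lemma Cmul_add_r z w u : Cmul u (Cadd z w) = Cadd (Cmul u z) (Cmul u w). Proof. cx_ring. Qed.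
Lemma Cscale_mul r z : Cscale r z = Cmul (RtoC r) z. Proof. cx_ring. Qed.

Fixpoint Rsum (n : nat) (g : nat -> R) : R :=
  match n with O => 0 | S m => Rsum m g + g m end.

Lemma Rsum_ext n g h : (forall i, (i < n)%nat -> g i = h i) -> Rsum n g = Rsum n h.
Proof. induction n; simpl; intros; auto. rewrite IHn by (intros; apply H; lia). rewrite H by lia; auto. Qed.
Lemma Rsum_le n g h : (forall i, (i < n)%nat -> g i <= h i) -> Rsum n g <= Rsum n h.
Proof. induction n; simpl; intros. lra. assert (g n <= h n) by (apply H; lia).
  assert (Rsum n g <= Rsum n h) by (apply IHn; intros; apply H; lia). lra. Qed.
Lemma Rsum_nonneg n g : (forall i, (i < n)%nat -> 0 <= g i) -> 0 <= Rsum n g.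
Proof. intros. replace 0 with (Rsum n (fun _ => 0)). apply Rsum_le; auto.
  induction n; simpl; auto. rewrite IHn; [lra|]. intros; apply H; lia. Qed.
Lemma Rsum_add n g h : Rsum n (fun i => g i + h i) = Rsum n g + Rsum n h.
Proof. induction n; simpl; lra. Qed.
Lemma Rsum_scal n c g : Rsum n (fun i => c * g i) = c * Rsum n g.
Proof. induction n; simpl; [ring|]. rewrite IHn; ring. Qed.
Lemma Rsum_zero n : Rsum n (fun _ => 0) = 0.
Proof. induction n; simpl; auto; lra. Qed.
Lemma Rsum_swap n m (g : nat -> nat -> R) :
  Rsum n (fun i => Rsum m (fun j => g i j)) = Rsum m (fun j => Rsum n (fun i => g i j)).
Proof. induction n; simpl. rewrite Rsum_zero; auto. rewrite IHn, <- Rsum_add; auto. Qed.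

Lemma Csum_fst n g : fst (Csum n g) = Rsum n (fun i => fst (g i)).
Proof. induction n; simpl; auto. rewrite IHn; auto. Qed.
Lemma Csum_ext n g h : (forall i, (i < n)%nat -> g i = h i) -> Csum n g = Csum n h.
Proof. induction n; simpl; intros; auto. rewrite IHn by (intros; apply H; lia). rewrite H by lia; auto. Qed.
Lemma Csum_add n g h : Csum n (fun i => Cadd (g i) (h i)) = Cadd (Csum n g) (Csum n h).
Proof. induction n; simpl. cx_ring. rewrite IHn. cx_ring. Qed.
Lemma Csum_mul_l n c g : Csum n (fun i => Cmul c (g i)) = Cmul c (Csum n g).
Proof. induction n; simpl. cx_ring. rewrite IHn. cx_ring. Qed.
Lemma Csum_mul_r n c g : Csum n (fun i => Cmul (g i) c) = Cmul (Csum n g) c.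
Proof. induction n; simpl. cx_ring. rewrite IHn. cx_ring. Qed.
Lemma Csum_scale n c g : Csum n (fun i => Cscale c (g i)) = Cscale c (Csum n g).
Proof. induction n; simpl. cx_ring. rewrite IHn. cx_ring. Qed.
Lemma Csum_zero n : Csum n (fun _ => C0) = C0.
Proof. induction n; simpl; auto. rewrite IHn; cx_ring. Qed.
Lemma Csum_zero' n g : (forall i, (i < n)%nat -> g i = C0) -> Csum n g = C0.
Proof. intros. rewrite (Csum_ext n g (fun _ => C0)); auto. apply Csum_zero. Qed.
Lemma Csum_split n m g : Csum (n + m) g = Cadd (Csum n g) (Csum m (fun i => g (n + i)%nat)).
Proof. induction m; simpl. rewrite Nat.add_0_r; cx_ring. rewrite Nat.add_succ_r; simpl; rewrite IHm; cx_ring. Qed.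
Lemma Csum_swap n m (g : nat -> nat -> Cx) :
  Csum n (fun i => Csum m (fun j => g i j)) = Csum m (fun j => Csum n (fun i => g i j)).
Proof. induction n; simpl. rewrite Csum_zero; auto. rewrite IHn, <- Csum_add; auto. Qed.
Lemma Csum_conj n g : Cconj (Csum n g) = Csum n (fun i => Cconj (g i)).
Proof. induction n; simpl. cx_ring. rewrite <- IHn. cx_ring. Qed.
Lemma Csum_delta n m (v : nat -> Cx) :
  Csum n (fun i => if Nat.eqb i m then v i else C0) = if Nat.ltb m n then v m else C0.
Proof. induction n; simpl; auto.
  rewrite IHn. destruct (Nat.eqb_spec n m); subst.
  - replace (Nat.ltb m m) with false by (symmetry; apply Nat.ltb_ge; lia).
    replace (Nat.ltb m (S m)) with true by (symmetry; apply Nat.ltb_lt; lia). cx_ring.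
  - destruct (Nat.ltb_spec m n); destruct (Nat.ltb_spec m (S n)); try lia; cx_ring. Qed.

Lemma Cnorm2_nonneg z : 0 <= Cnorm2 z.
Proof. unfold Cnorm2; nra. Qed.
Lemma Cabs_nonneg z : 0 <= Cabs z. Proof. apply sqrt_pos. Qed.
Lemma Cabs_sq z : Cabs z * Cabs z = Cnorm2 z.
Proof. apply sqrt_sqrt, Cnorm2_nonneg. Qed.
Lemma Cnorm2_mul z w : Cnorm2 (Cmul z w) = Cnorm2 z * Cnorm2 w. Proof. cx_expand; ring. Qed.
Lemma Cabs_mul z w : Cabs (Cmul z w) = Cabs z * Cabs w.
Proof. unfold Cabs; rewrite Cnorm2_mul, sqrt_mult; auto; apply Cnorm2_nonneg. Qed.
Lemma Cabs_RtoC r : Cabs (RtoC r) = Rabs r.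
Proof. unfold Cabs, RtoC, Cnorm2; simpl. rewrite <- sqrt_Rsqr_abs. f_equal. unfold Rsqr; ring. Qed.
Lemma Cabs_scale r z : Cabs (Cscale r z) = Rabs r * Cabs z.
Proof. rewrite Cscale_mul, Cabs_mul, Cabs_RtoC; auto. Qed.
Lemma Cabs_conj z : Cabs (Cconj z) = Cabs z.
Proof. unfold Cabs; f_equal; cx_expand; ring. Qed.
Lemma Cabs_opp z : Cabs (Copp z) = Cabs z.
Proof. unfold Cabs; f_equal; cx_expand; ring. Qed.
Lemma Cfst_le_abs z : fst z <= Cabs z.
Proof. unfold Cabs, Cnorm2. destruct (Rle_dec (fst z) 0). pose proof (sqrt_pos (fst z * fst z + snd z * snd z)); lra.
  rewrite <- (sqrt_Rsqr (fst z)) at 1 by lra. apply sqrt_le_1_alt. unfold Rsqr; nra. Qed.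
Lemma Cabs_fst z : Rabs (fst z) <= Cabs z.
Proof. unfold Cabs, Cnorm2. rewrite <- sqrt_Rsqr_abs. apply sqrt_le_1_alt. unfold Rsqr; nra. Qed.
Lemma Cabs_snd z : Rabs (snd z) <= Cabs z.
Proof. unfold Cabs, Cnorm2. rewrite <- sqrt_Rsqr_abs. apply sqrt_le_1_alt. unfold Rsqr; nra. Qed.
Lemma Cabs_le_fst_snd z : Cabs z <= Rabs (fst z) + Rabs (snd z).
Proof. unfold Cabs, Cnorm2. rewrite <- (sqrt_Rsqr (Rabs (fst z) + Rabs (snd z))) by (pose proof (Rabs_pos (fst z)); pose proof (Rabs_pos (snd z)); lra).
  apply sqrt_le_1_alt. unfold Rsqr. pose proof (Rabs_pos (fst z)); pose proof (Rabs_pos (snd z)).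
  pose proof (Rsqr_abs (fst z)); pose proof (Rsqr_abs (snd z)); unfold Rsqr in *. nra. Qed.

Lemma sqrt_mul_add_le a b c d : 0 <= a -> 0 <= b -> 0 <= c -> 0 <= d ->
  sqrt a * sqrt b + sqrt c * sqrt d <= sqrt (a + c) * sqrt (b + d).
Proof. intros. rewrite <- (sqrt_mult (a+c) (b+d)) by lra.
  pose proof (sqrt_pos a); pose proof (sqrt_pos b); pose proof (sqrt_pos c); pose proof (sqrt_pos d).
  rewrite <- (sqrt_Rsqr (sqrt a * sqrt b + sqrt c * sqrt d)) by nra. apply sqrt_le_1_alt.
  unfold Rsqr. pose proof (sqrt_sqrt a H); pose proof (sqrt_sqrt b H0); pose proof (sqrt_sqrt c H1); pose proof (sqrt_sqrt d H2).
  replace ((a + c) * (b + d)) with ((sqrt a * sqrt a + sqrt c * sqrt c) * (sqrt b * sqrt b + sqrt d * sqrt d)) by (rewrite H7,H8,H9,H10; ring).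
  assert (forall x y u v:R, (x*y+u*v)*(x*y+u*v) <= (x*x+u*u)*(y*y+v*v)).
  { intros. pose proof (pow2_ge_0 (x*v - y*u)). nra. }
  apply H11. Qed.
Lemma Rsum_sqrt_cauchy n u P Q : (forall i, (i < n)%nat -> 0 <= P i /\ 0 <= Q i /\ u i <= sqrt (P i) * sqrt (Q i)) ->
  Rsum n u <= sqrt (Rsum n P) * sqrt (Rsum n Q).
Proof. induction n; simpl; intros. rewrite sqrt_0; lra.
  assert (Rsum n u <= sqrt (Rsum n P) * sqrt (Rsum n Q)) by (apply IHn; intros; apply H; lia).
  destruct (H n) as [? [? ?]]; [lia|].
  assert (0 <= Rsum n P) by (apply Rsum_nonneg; intros; apply H; lia).
  assert (0 <= Rsum n Q) by (apply Rsum_nonneg; intros; apply H; lia).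
  pose proof (sqrt_mul_add_le (Rsum n P) (Rsum n Q) (P n) (Q n)). lra. Qed.

Lemma Cabs_triangle z w : Cabs (Cadd z w) <= Cabs z + Cabs w.
Proof. unfold Cabs. pose proof (sqrt_pos (Cnorm2 z)); pose proof (sqrt_pos (Cnorm2 w)).
  rewrite <- (sqrt_Rsqr (sqrt (Cnorm2 z) + sqrt (Cnorm2 w))) by lra. apply sqrt_le_1_alt.
  unfold Rsqr. pose proof (sqrt_sqrt _ (Cnorm2_nonneg z)); pose proof (sqrt_sqrt _ (Cnorm2_nonneg w)).
  pose proof (sqrt_cauchy (fst z) (snd z) (fst w) (snd w)). unfold Rsqr in H3. unfold Cnorm2 in *.
  destruct z, w; simpl in *. nra. Qed.

Lemma Cmul_inv_exists z : z <> C0 -> exists w, Cmul z w = C1.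
Proof. intros. assert (Cnorm2 z <> 0). { intro. apply H. destruct z; unfold Cnorm2 in *; simpl in *; unfold C0; f_equal; nra. }
  exists (fst z / Cnorm2 z, - snd z / Cnorm2 z). unfold Cnorm2 in *; destruct z; unfold Cmul, C1; simpl; f_equal; field; auto. Qed.

Lemma vnorm_eq n x : vnorm n x = sqrt (Rsum n (fun j => Cnorm2 (x j))).
Proof. unfold vnorm; rewrite Csum_fst; reflexivity. Qed.
Lemma vnorm_ext n x y : (forall j, (j < n)%nat -> x j = y j) -> vnorm n x = vnorm n y.
Proof. intros; rewrite !vnorm_eq; f_equal; apply Rsum_ext; intros; rewrite H; auto. Qed.
Lemma vnorm_nonneg n x : 0 <= vnorm n x.
Proof. rewrite vnorm_eq; apply sqrt_pos. Qed.
Lemma Rsum_Cnorm2_nonneg n x : 0 <= Rsum n (fun j => Cnorm2 (x j)).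
Proof. apply Rsum_nonneg; intros; apply Cnorm2_nonneg. Qed.

Lemma vnorm_add n x y : vnorm n (fun j => Cadd (x j) (y j)) <= vnorm n x + vnorm n y.
Proof. rewrite !vnorm_eq.
  set (Sx := Rsum n (fun j => Cnorm2 (x j))). set (Sy := Rsum n (fun j => Cnorm2 (y j))).
  assert (Hx : 0 <= Sx) by apply Rsum_Cnorm2_nonneg. assert (Hy : 0 <= Sy) by apply Rsum_Cnorm2_nonneg.
  assert (Hc : Rsum n (fun j => fst (x j) * fst (y j) + snd (x j) * snd (y j)) <= sqrt Sx * sqrt Sy).
  { apply Rsum_sqrt_cauchy. intros; repeat split; try apply Cnorm2_nonneg.
    pose proof (sqrt_cauchy (fst (x i)) (snd (x i)) (fst (y i)) (snd (y i))). unfold Rsqr, Cnorm2 in *; auto. }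
  assert (E : Rsum n (fun j => Cnorm2 (Cadd (x j) (y j))) = Sx + Sy + 2 * Rsum n (fun j => fst (x j) * fst (y j) + snd (x j) * snd (y j))).
  { unfold Sx, Sy. rewrite <- Rsum_scal, <- !Rsum_add. apply Rsum_ext; intros. unfold Cnorm2, Cadd; simpl; ring. }
  rewrite E. pose proof (sqrt_pos Sx); pose proof (sqrt_pos Sy).
  rewrite <- (sqrt_Rsqr (sqrt Sx + sqrt Sy)) by lra. apply sqrt_le_1_alt. unfold Rsqr.
  pose proof (sqrt_sqrt Sx Hx); pose proof (sqrt_sqrt Sy Hy). nra. Qed.

Lemma vnorm_cmul n c x : vnorm n (fun j => Cmul c (x j)) = Cabs c * vnorm n x.
Proof. rewrite !vnorm_eq. unfold Cabs. rewrite <- sqrt_mult by (apply Cnorm2_nonneg || apply Rsum_Cnorm2_nonneg).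
  f_equal. rewrite <- Rsum_scal. apply Rsum_ext; intros; apply Cnorm2_mul. Qed.
Lemma vnorm_scale n r x : vnorm n (fun j => Cscale r (x j)) = Rabs r * vnorm n x.
Proof. rewrite <- Cabs_RtoC, <- vnorm_cmul. apply vnorm_ext; intros; apply Cscale_mul. Qed.

Lemma Rsum_ge_term n g j : (forall i, (i < n)%nat -> 0 <= g i) -> (j < n)%nat -> g j <= Rsum n g.
Proof. induction n; simpl; intros. lia. assert (0 <= Rsum n g) by (apply Rsum_nonneg; intros; apply H; lia).
  destruct (Nat.eq_dec j n). subst; lra. assert (g j <= Rsum n g) by (apply IHn; intros; try apply H; lia).
  assert (0 <= g n) by (apply H; lia). lra. Qed.

Lemma vnorm_ge_entry n x j : (j < n)%nat -> Cabs (x j) <= vnorm n x.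
Proof. intros. rewrite vnorm_eq. unfold Cabs. apply sqrt_le_1_alt. apply (Rsum_ge_term n (fun j => Cnorm2 (x j))); auto.
  intros; apply Cnorm2_nonneg. Qed.

Definition mzero : mat := fun _ _ => C0.
Definition msub (X Y : mat) : mat := madd X (mscale (-1) Y).
Definition unit_vec (k : nat) : vec := fun j => if Nat.eqb j k then C1 else C0.

Lemma matvec_madd n X Y x j : matvec n (madd X Y) x j = Cadd (matvec n X x j) (matvec n Y x j).
Proof. unfold matvec, madd. rewrite <- Csum_add. apply Csum_ext; intros. cx_ring. Qed.
Lemma matvec_mscale n r X x j : matvec n (mscale r X) x j = Cscale r (matvec n X x j).
Proof. unfold matvec, mscale. rewrite <- Csum_scale. apply Csum_ext; intros. cx_ring. Qed.
Lemma matvec_mmul n X Y x j : matvec n (mmul n X Y) x j = matvec n X (matvec n Y x) j.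
Proof. unfold matvec, mmul.
  transitivity (Csum n (fun k => Csum n (fun l => Cmul (X j l) (Cmul (Y l k) (x k))))).
  { apply Csum_ext; intros. rewrite <- Csum_mul_r. apply Csum_ext; intros. apply Cmul_assoc. }
  rewrite Csum_swap. apply Csum_ext; intros. apply Csum_mul_l. Qed.
Lemma matvec_unit_vec n X k j : (k < n)%nat -> matvec n X (unit_vec k) j = X j k.
Proof. intros. unfold matvec, unit_vec.
  rewrite (Csum_ext n _ (fun i => if Nat.eqb i k then X j i else C0)).
  rewrite Csum_delta. destruct (Nat.ltb_spec k n); auto; lia.
  intros. destruct (Nat.eqb i k); cx_ring. Qed.
Lemma vnorm_unit_vec n k : (k < n)%nat -> vnorm n (unit_vec k) = 1.
Proof. intros. rewrite vnorm_eq. rewrite (Rsum_ext n _ (fun i => fst (if Nat.eqb i k then C1 else C0))).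
  rewrite <- Csum_fst, Csum_delta. destruct (Nat.ltb_spec k n); try lia. simpl. apply sqrt_1.
  intros. unfold unit_vec. destruct (Nat.eqb i k); unfold Cnorm2, C1, C0; simpl; ring. Qed.

Lemma mat_eq_sym n X Y : mat_eq n X Y -> mat_eq n Y X.
Proof. unfold mat_eq; intros; symmetry; auto. Qed.
Lemma mat_eq_trans n X Y Z : mat_eq n X Y -> mat_eq n Y Z -> mat_eq n X Z.
Proof. unfold mat_eq; intros. rewrite H; auto. Qed.
Lemma mat_eq_refl n X : mat_eq n X X.
Proof. unfold mat_eq; auto. Qed.
Lemma mmul_ext n X X' Y Y' : mat_eq n X X' -> mat_eq n Y Y' -> mat_eq n (mmul n X Y) (mmul n X' Y').
Proof. unfold mat_eq, mmul; intros. apply Csum_ext; intros. rewrite H, H0; auto. Qed.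
Lemma madd_ext n X X' Y Y' : mat_eq n X X' -> mat_eq n Y Y' -> mat_eq n (madd X Y) (madd X' Y').
Proof. unfold mat_eq, madd; intros. rewrite H, H0; auto. Qed.
Lemma msub_madd_eq n X Y Z : mat_eq n (msub X Y) Z -> mat_eq n X (madd Y Z).
Proof. unfold mat_eq, msub, madd, mscale; intros H j k Hj Hk. rewrite <- H by auto. cx_ring. Qed.

Lemma mmul_madd_l n X Y Z : mmul n (madd X Y) Z = madd (mmul n X Z) (mmul n Y Z).
Proof. extensionality j; extensionality k. unfold mmul, madd. rewrite <- Csum_add. apply Csum_ext; intros; cx_ring. Qed.
Lemma mmul_madd_r n X Y Z : mmul n Z (madd X Y) = madd (mmul n Z X) (mmul n Z Y).
Proof. extensionality j; extensionality k. unfold mmul, madd. rewrite <- Csum_add. apply Csum_ext; intros; cx_ring. Qed.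
Lemma mmul_assoc n X Y Z : mmul n (mmul n X Y) Z = mmul n X (mmul n Y Z).
Proof. extensionality j; extensionality k. unfold mmul.
  transitivity (Csum n (fun l => Csum n (fun m => Cmul (X j m) (Cmul (Y m l) (Z l k))))).
  { apply Csum_ext; intros. rewrite <- Csum_mul_r. apply Csum_ext; intros. apply Cmul_assoc. }
  rewrite Csum_swap. apply Csum_ext; intros. apply Csum_mul_l. Qed.
Lemma mmul_mid_l n X : mat_eq n (mmul n mid X) X.
Proof. unfold mat_eq, mmul, mid; intros.
  rewrite (Csum_ext n _ (fun l => if Nat.eqb l j then X l k else C0)).
  rewrite Csum_delta. destruct (Nat.ltb_spec j n); auto; lia.
  intros. rewrite Nat.eqb_sym. destruct (Nat.eqb i j); cx_ring. Qed.
Lemma mmul_mid_r n X : mat_eq n (mmul n X mid) X.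
Proof. unfold mat_eq, mmul, mid; intros.
  rewrite (Csum_ext n _ (fun l => if Nat.eqb l k then X j l else C0)).
  rewrite Csum_delta. destruct (Nat.ltb_spec k n); auto; lia.
  intros. destruct (Nat.eqb i k); cx_ring. Qed.
Lemma is_inverse_unique n S B B' : is_inverse n S B -> is_inverse n S B' -> mat_eq n B' B.
Proof. intros [H1 H2] [H3 H4].
  apply mat_eq_trans with (mmul n B' (mmul n S B)). apply mat_eq_sym. eapply mat_eq_trans.
  apply mmul_ext. apply mat_eq_refl. apply H2. apply mmul_mid_r.
  rewrite <- mmul_assoc. eapply mat_eq_trans. apply mmul_ext. apply H3. apply mat_eq_refl. apply mmul_mid_l. Qed.

Lemma opnorm_ext n X Y c : mat_eq n X Y -> opnorm_le n X c -> opnorm_le n Y c.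
Proof. unfold opnorm_le; intros. rewrite <- (H0 x). apply Req_le, vnorm_ext; intros.
  unfold matvec; apply Csum_ext; intros. rewrite H; auto. Qed.
Lemma opnorm_mono n X c c' : c <= c' -> opnorm_le n X c -> opnorm_le n X c'.
Proof. unfold opnorm_le; intros. pose proof (H0 x); pose proof (vnorm_nonneg n x). nra. Qed.
Lemma opnorm_add n X Y a b : opnorm_le n X a -> opnorm_le n Y b -> opnorm_le n (madd X Y) (a + b).
Proof. unfold opnorm_le; intros.
  rewrite (vnorm_ext n _ (fun j => Cadd (matvec n X x j) (matvec n Y x j))) by (intros; apply matvec_madd).
  pose proof (vnorm_add n (matvec n X x) (matvec n Y x)). pose proof (H x); pose proof (H0 x). lra. Qed.
Lemma opnorm_scale n r X a : opnorm_le n X a -> opnorm_le n (mscale r X) (Rabs r * a).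
Proof. unfold opnorm_le; intros.
  rewrite (vnorm_ext n _ (fun j => Cscale r (matvec n X x j))) by (intros; apply matvec_mscale).
  rewrite vnorm_scale. pose proof (H x); pose proof (Rabs_pos r). nra. Qed.
Lemma opnorm_mul n X Y a b : 0 <= a -> opnorm_le n X a -> opnorm_le n Y b -> opnorm_le n (mmul n X Y) (a * b).
Proof. unfold opnorm_le; intros.
  rewrite (vnorm_ext n _ (matvec n X (matvec n Y x))) by (intros; apply matvec_mmul).
  pose proof (H0 (matvec n Y x)); pose proof (H1 x). nra. Qed.
Lemma opnorm_zero n : opnorm_le n mzero 0.
Proof. unfold opnorm_le; intros. rewrite (vnorm_ext n _ (fun _ => C0)).
  rewrite vnorm_eq, (Rsum_ext n _ (fun _ => 0)), Rsum_zero, sqrt_0; [lra|]. intros; unfold Cnorm2, C0; simpl; ring.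
  intros. unfold matvec, mzero. apply Csum_zero'. intros; cx_ring. Qed.
Lemma opnorm_mid n : opnorm_le n mid 1.
Proof. unfold opnorm_le; intros. rewrite Rmult_1_l. apply Req_le, vnorm_ext; intros.
  unfold matvec, mid. rewrite (Csum_ext n _ (fun k => if Nat.eqb k j then x k else C0)).
  rewrite Csum_delta. destruct (Nat.ltb_spec j n); auto; lia.
  intros. rewrite Nat.eqb_sym. destruct (Nat.eqb i j); cx_ring. Qed.
Lemma opnorm_entry n X c j k : opnorm_le n X c -> (j < n)%nat -> (k < n)%nat -> Cabs (X j k) <= c.
Proof. intros. pose proof (H (unit_vec k)). rewrite vnorm_unit_vec in H2 by auto.
  pose proof (vnorm_ge_entry n (matvec n X (unit_vec k)) j H0). rewrite matvec_unit_vec in H3 by auto. lra. Qed.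
Lemma opnorm_nonneg n X c : (0 < n)%nat -> opnorm_le n X c -> 0 <= c.
Proof. intros. pose proof (H0 (unit_vec 0)). rewrite vnorm_unit_vec in H1 by auto. pose proof (vnorm_nonneg n (matvec n X (unit_vec 0))). lra. Qed.
Lemma opnorm_mpow n X a q : 0 <= a -> opnorm_le n X a -> opnorm_le n (mpow n X q) (a ^ q).
Proof. intros. induction q; simpl. apply opnorm_mid. apply opnorm_mul; auto. Qed.
Lemma opnorm_sub n X Y a b : opnorm_le n X a -> opnorm_le n Y b -> opnorm_le n (msub X Y) (a + b).
Proof. intros. unfold msub. apply opnorm_add; auto.
  apply (opnorm_mono _ _ (Rabs (-1) * b)). rewrite Rabs_left by lra; lra. apply opnorm_scale; auto. Qed.

(** * Rank bounds through factorizations *)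

(* Unlike [rank_le], this is stable under sums and products. *)
Definition low_rank (n : nat) (X : mat) (r : nat) : Prop :=
  exists U V : nat -> nat -> Cx, mat_eq n X (fun j k => Csum r (fun i => Cmul (U i j) (V i k))).

Lemma low_rank_zero n : low_rank n mzero 0.
Proof. exists (fun _ _ => C0), (fun _ _ => C0). unfold mat_eq; simpl; auto. Qed.
Lemma low_rank_mono n X r r' : (r <= r')%nat -> low_rank n X r -> low_rank n X r'.
Proof. intros H [U [V H1]]. exists (fun i j => if Nat.ltb i r then U i j else C0), V.
  unfold mat_eq; intros. rewrite H1 by auto. replace r' with (r + (r' - r))%nat by lia.
  rewrite Csum_split. rewrite (Csum_zero' (r' - r)). rewrite Cadd_0_r. apply Csum_ext; intros.
  destruct (Nat.ltb_spec i r); auto; lia.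
  intros. destruct (Nat.ltb_spec (r + i) r); try lia. cx_ring. Qed.
Lemma low_rank_add n X Y r s : low_rank n X r -> low_rank n Y s -> low_rank n (madd X Y) (r + s).
Proof. intros [U [V H1]] [U' [V' H2]].
  exists (fun i j => if Nat.ltb i r then U i j else U' (i - r)%nat j), (fun i k => if Nat.ltb i r then V i k else V' (i - r)%nat k).
  unfold mat_eq, madd; intros. rewrite H1, H2 by auto. rewrite Csum_split. f_equal.
  apply Csum_ext; intros; destruct (Nat.ltb_spec i r); auto; lia.
  apply Csum_ext; intros; destruct (Nat.ltb_spec (r + i) r); try lia. replace (r + i - r)%nat with i by lia; auto. Qed.
Lemma low_rank_scale n a X r : low_rank n X r -> low_rank n (mscale a X) r.
Proof. intros [U [V H1]]. exists (fun i j => Cscale a (U i j)), V. unfold mat_eq, mscale; intros.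
  rewrite H1 by auto. rewrite <- Csum_scale. apply Csum_ext; intros; cx_ring. Qed.
Lemma low_rank_mul_l n A X r : low_rank n X r -> low_rank n (mmul n A X) r.
Proof. intros [U [V H1]]. exists (fun i j => Csum n (fun l => Cmul (A j l) (U i l))), V.
  unfold mat_eq, mmul; intros.
  rewrite (Csum_ext n _ (fun l => Csum r (fun i => Cmul (A j l) (Cmul (U i l) (V i k))))).
  rewrite Csum_swap. apply Csum_ext; intros. rewrite <- Csum_mul_r. apply Csum_ext; intros; cx_ring.
  intros. rewrite H1 by auto. rewrite Csum_mul_l; auto. Qed.
Lemma low_rank_mul_r n A X r : low_rank n X r -> low_rank n (mmul n X A) r.
Proof. intros [U [V H1]]. exists U, (fun i k => Csum n (fun l => Cmul (V i l) (A l k))).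
  unfold mat_eq, mmul; intros.
  rewrite (Csum_ext n _ (fun l => Csum r (fun i => Cmul (U i j) (Cmul (V i l) (A l k))))).
  rewrite Csum_swap. apply Csum_ext; intros. rewrite <- Csum_mul_l. apply Csum_ext; intros; cx_ring.
  intros. rewrite H1 by auto. rewrite <- Csum_mul_r. apply Csum_ext; intros; cx_ring. Qed.
Lemma low_rank_full n X : low_rank n X n.
Proof. exists (fun i j => if Nat.eqb j i then C1 else C0), (fun i k => X i k).
  unfold mat_eq; intros. rewrite (Csum_ext n _ (fun i => if Nat.eqb i j then X i k else C0)).
  rewrite Csum_delta. destruct (Nat.ltb_spec j n); auto; lia.
  intros. rewrite Nat.eqb_sym. destruct (Nat.eqb i j); cx_ring. Qed.

Definition skip_index (i0 i : nat) : nat := if Nat.ltb i i0 then i else S i.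
Lemma Csum_skip_index p i0 h : (i0 < p)%nat -> Csum p h = Cadd (h i0) (Csum (p - 1) (fun i => h (skip_index i0 i))).
Proof. revert i0. induction p; intros. lia. destruct (Nat.eq_dec i0 p).
  - subst. simpl. replace (p - 0)%nat with p by lia. rewrite Cadd_comm. f_equal.
    apply Csum_ext; intros; unfold skip_index; destruct (Nat.ltb_spec i p); auto; lia.
  - simpl Csum at 1. rewrite (IHp i0) by lia. destruct p. lia. replace (S (S p) - 1)%nat with (S p) by lia.
    replace (S p - 1)%nat with p by lia. simpl Csum at 2. rewrite Cadd_assoc. f_equal. f_equal.
    unfold skip_index. destruct (Nat.ltb_spec p i0); auto; lia. Qed.

(* Eliminate an unknown that has a nonzero coefficient in the last equation, and recurse. *)
Lemma homogeneous_system_nontrivial r : forall p (a : nat -> nat -> Cx), (r < p)%nat ->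
  exists alpha : nat -> Cx, (exists i, (i < p)%nat /\ alpha i <> C0) /\
    forall m, (m < r)%nat -> Csum p (fun i => Cmul (alpha i) (a m i)) = C0.
Proof. induction r; intros.
  - exists (fun _ => C1). split. exists O; split; [lia|]. unfold C1, C0; intro E; injection E; intros; lra. intros; lia.
  - destruct (classic (exists i0, (i0 < p)%nat /\ a r i0 <> C0)) as [[i0 [Hi0 Hnz]]|Hno].
    + destruct (Cmul_inv_exists _ Hnz) as [w Hw].
      set (b := fun m i => Cadd (a m (skip_index i0 i)) (Copp (Cmul (a m i0) (Cmul (a r (skip_index i0 i)) w)))).
      destruct (IHr (p - 1)%nat b) as [beta [[i [Hi Hb]] Hsol]]; [lia|].
      set (gam := Copp (Cmul (Csum (p - 1) (fun i => Cmul (beta i) (a r (skip_index i0 i)))) w)).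
      set (alpha := fun j => if Nat.eqb j i0 then gam else if Nat.ltb j i0 then beta j else beta (j - 1)%nat).
      assert (Ha : forall i, alpha (skip_index i0 i) = beta i).
      { intros k. unfold alpha, skip_index. destruct (Nat.ltb_spec k i0).
        destruct (Nat.eqb_spec k i0); try lia. destruct (Nat.ltb_spec k i0); try lia; auto.
        destruct (Nat.eqb_spec (S k) i0); try lia. destruct (Nat.ltb_spec (S k) i0); try lia. f_equal; lia. }
      exists alpha. split.
      { exists (skip_index i0 i). split. unfold skip_index; destruct (Nat.ltb_spec i i0); lia. rewrite Ha; auto. }
      intros m Hm. rewrite (Csum_skip_index p i0) by auto.
      rewrite (Csum_ext (p-1) _ (fun i => Cmul (beta i) (a m (skip_index i0 i)))) by (intros; rewrite Ha; auto).
      assert (Hg : alpha i0 = gam) by (unfold alpha; rewrite Nat.eqb_refl; auto). rewrite Hg.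
      destruct (Nat.eq_dec m r).
      * subst. unfold gam. set (S0 := Csum (p - 1) (fun i => Cmul (beta i) (a r (skip_index i0 i)))).
        replace (Cmul (Copp (Cmul S0 w)) (a r i0)) with (Copp (Cmul S0 (Cmul (a r i0) w))) by cx_ring.
        rewrite Hw. cx_ring.
      * assert (Hm' : (m < r)%nat) by lia. pose proof (Hsol m Hm') as Hs. unfold b in Hs.
        rewrite (Csum_ext (p-1) _ (fun i => Cadd (Cmul (beta i) (Cadd (a m (skip_index i0 i)) (Copp (Cmul (a m i0) (Cmul (a r (skip_index i0 i)) w)))))
                 (Cmul (Cmul (a m i0) w) (Cmul (beta i) (a r (skip_index i0 i)))))) by (intros; cx_ring).
        rewrite Csum_add, Hs, Csum_mul_l. unfold gam. cx_ring.
    + destruct (IHr p a) as [alpha [Hnt Hsol]]; [lia|]. exists alpha. split; auto.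
      intros. destruct (Nat.eq_dec m r). subst. apply Csum_zero'. intros.
      destruct (classic (a r i = C0)). rewrite H2; apply Cmul_0_r. exfalso; apply Hno; eauto.
      apply Hsol; lia. Qed.

Lemma rank_le_of_low_rank n X r : low_rank n X r -> rank_le n X r.
Proof. intros [U [V H]] cols Hnd Hf Hind. destruct (le_lt_dec (length cols) r); auto. exfalso.
  destruct (homogeneous_system_nontrivial r (length cols) (fun m i => V m (nth i cols O)) l) as [alpha [[i [Hi Hnz]] Hsol]].
  apply Hnz. apply Hind; auto. intros j Hj.
  assert (Hc : forall i, (i < length cols)%nat -> (nth i cols O < n)%nat).
  { intros. rewrite Forall_forall in Hf. apply Hf. apply nth_In; auto. }
  rewrite (Csum_ext _ _ (fun i => Csum r (fun m => Cmul (U m j) (Cmul (alpha i) (V m (nth i cols O)))))).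
  rewrite Csum_swap. apply Csum_zero'. intros m Hm. rewrite Csum_mul_l, Hsol by auto. apply Cmul_0_r.
  intros. rewrite H by auto. rewrite <- Csum_mul_l. apply Csum_ext; intros; cx_ring. Qed.

(** * The matrix sine series *)

Definition sin_coef (m : nat) : R := (-1) ^ m / INR (fact (2 * m + 1)).
Definition sin_term (n : nat) (X : mat) (m : nat) : mat := mscale (sin_coef m) (mpow n X (2 * m + 1)).
Definition sin_partial (n d : nat) (X : mat) : mat := msum d (sin_term n X).
Definition sin_term_bound (a : R) (m : nat) : R := a ^ (2 * m + 1) / INR (fact (2 * m + 1)).

Lemma sin_coef_abs m : Rabs (sin_coef m) <= 1.
Proof. assert (1 <= INR (fact (2*m+1))). { apply (le_INR 1). pose proof (lt_O_fact (2*m+1)); lia. }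
  unfold sin_coef, Rdiv. rewrite Rabs_mult, pow_1_abs, Rabs_inv, (Rabs_right (INR _)) by lra.
  rewrite Rmult_1_l. rewrite <- Rinv_1. apply Rinv_le_contravar; lra. Qed.

Lemma opnorm_sin_term n X a m : 0 <= a -> opnorm_le n X a -> opnorm_le n (sin_term n X m) (sin_term_bound a m).
Proof. intros. unfold sin_term, sin_term_bound. eapply opnorm_mono; [|apply opnorm_scale, opnorm_mpow; eauto].
  assert (1 <= INR (fact (2*m+1))). { apply (le_INR 1). pose proof (lt_O_fact (2*m+1)); lia. }
  unfold sin_coef, Rdiv. rewrite Rabs_mult, pow_1_abs, Rabs_inv, (Rabs_right (INR _)) by lra. lra. Qed.

Lemma opnorm_msum n K F c : (forall i, (i < K)%nat -> opnorm_le n (F i) (c i)) -> opnorm_le n (msum K F) (Rsum K c).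
Proof. induction K; intros; simpl. apply opnorm_zero.
  change (msum (S K) F) with (madd (msum K F) (F K)). apply opnorm_add. apply IHK; intros; apply H; lia. apply H; lia. Qed.

Lemma sin_partial_split n d K X : sin_partial n (d + K) X = madd (sin_partial n d X) (msum K (fun i => sin_term n X (d + i)%nat)).
Proof. extensionality j; extensionality k. unfold sin_partial, msum, madd. apply Csum_split. Qed.

Lemma opnorm_sin_partial_tail n X a d K : 0 <= a -> opnorm_le n X a ->
  opnorm_le n (msum K (fun i => sin_term n X (d + i)%nat)) (Rsum K (fun i => sin_term_bound a (d + i))).
Proof. intros. apply opnorm_msum; intros; apply opnorm_sin_term; auto. Qed.

Lemma Rsum_geom_half K c : Rsum K (fun i => c * (/2) ^ i) = 2 * c * (1 - (/2) ^ K).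
Proof. induction K; simpl. ring. rewrite IHK. field. Qed.

(* Once q >= 2a the terms a^q / q! at least halve at each step, so the tails are dominated by a
   geometric series. *)
Lemma sin_tail_small a eta : 0 <= a -> 0 < eta -> exists d, forall K, Rsum K (fun i => sin_term_bound a (d + i)) <= eta.
Proof. intros Ha He.
  set (s := fun q => a ^ q / INR (fact q)).
  assert (Hs0 : forall q, 0 <= s q). { intros; unfold s, Rdiv. apply Rmult_le_pos. apply pow_le; auto.
    left; apply Rinv_0_lt_compat, (lt_INR 0), lt_O_fact. }
  destruct (INR_unbounded (2 * a)) as [q0 Hq0].
  assert (Hstep : forall q, (q0 <= q)%nat -> s (S q) <= s q / 2).
  { intros. unfold s. rewrite fact_simpl, mult_INR, <- tech_pow_Rmult.
    assert (INR q0 <= INR q) by (apply le_INR; auto). rewrite S_INR.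
    pose proof (lt_INR 0 (fact q) (lt_O_fact _)). simpl in H1.
    assert (0 <= a ^ q) by (apply pow_le; auto).
    unfold Rdiv. rewrite Rinv_mult.
    replace (a * a ^ q * (/ (INR q + 1) * / INR (fact q))) with ((a / (INR q + 1)) * (a ^ q * / INR (fact q))) by (field; lra).
    replace (a ^ q * / INR (fact q) * / 2) with (/2 * (a ^ q * / INR (fact q))) by ring.
    apply Rmult_le_compat_r. apply Rmult_le_pos; auto. left; apply Rinv_0_lt_compat; auto.
    apply (Rmult_le_reg_r (INR q + 1)); [lra|]. unfold Rdiv; rewrite Rmult_assoc, Rinv_l by lra. lra. }
  assert (Hgeo : forall q i, (q0 <= q)%nat -> s (q + 2 * i)%nat <= s q * (/2) ^ i).
  { intros q i Hq. induction i. simpl. rewrite Nat.add_0_r; lra.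
    replace (q + 2 * S i)%nat with (S (S (q + 2 * i))) by lia.
    pose proof (Hstep (S (q + 2 * i)) ltac:(lia)). pose proof (Hstep (q + 2 * i)%nat ltac:(lia)).
    pose proof (Hs0 (q + 2*i)%nat). pose proof (Hs0 (S (q + 2*i))). change ((/2)^(S i)) with (/2 * (/2)^i).
    replace (s q * (/ 2 * (/ 2) ^ i)) with (/2 * (s q * (/ 2) ^ i)) by ring. lra. }
  destruct (cv_speed_pow_fact a (eta / 4)) as [N1 HN1]. lra.
  set (d := max q0 N1). exists d. intros K.
  assert (Hd : s (2 * d + 1)%nat < eta / 4).
  { pose proof (HN1 (2 * d + 1)%nat ltac:(unfold d; lia)). unfold R_dist in H. rewrite Rminus_0_r in H.
    unfold s. rewrite Rabs_right in H; auto. apply Rle_ge. apply Hs0. }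
  apply Rle_trans with (Rsum K (fun i => s (2 * d + 1)%nat * (/2) ^ i)).
  { apply Rsum_le; intros. unfold sin_term_bound. fold (s (2 * (d + i) + 1)%nat).
    replace (2 * (d + i) + 1)%nat with (2 * d + 1 + 2 * i)%nat by lia. apply Hgeo. unfold d; lia. }
  rewrite Rsum_geom_half. assert (0 <= (/2) ^ K) by (apply pow_le; lra). pose proof (Hs0 (2*d+1)%nat). nra. Qed.

Lemma Un_cv_const (c : R) : Un_cv (fun _ => c) c.
Proof. intros e He. exists O. intros. unfold R_dist. rewrite Rminus_diag, Rabs_R0; auto. Qed.

Lemma Clim_spec u l : Ccv u l -> Clim u = l.
Proof. intros H. unfold Clim. destruct (epsilon_spec (inhabits C0) (Ccv u) (ex_intro _ l H)) as [H1 H2].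
  destruct H. apply Cpair_eq. eapply UL_sequence; eauto. eapply UL_sequence; eauto. Qed.

Lemma Ccv_Csum n (u : nat -> nat -> Cx) l : (forall i, (i < n)%nat -> Ccv (fun K => u K i) (l i)) ->
  Ccv (fun K => Csum n (u K)) (Csum n l).
Proof. induction n; intros. split; simpl; apply Un_cv_const.
  assert (IH : Ccv (fun K => Csum n (u K)) (Csum n l)) by (apply IHn; intros; apply H; lia).
  destruct (H n) as [Ha Hb]; [lia|]. destruct IH as [Hc Hd]. split; simpl; apply CV_plus; auto. Qed.
Lemma Ccv_mul u v a b : Ccv u a -> Ccv v b -> Ccv (fun K => Cmul (u K) (v K)) (Cmul a b).
Proof. intros [H1 H2] [H3 H4]. split; simpl.
  apply CV_minus; apply CV_mult; auto. apply CV_plus; apply CV_mult; auto. Qed.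
Lemma Ccv_const c : Ccv (fun _ => c) c.
Proof. split; apply Un_cv_const. Qed.

Lemma Rsum_Cnorm2_cv m (v : nat -> vec) (w : vec) : (forall j, (j < m)%nat -> Ccv (fun K => v K j) (w j)) ->
  Un_cv (fun K => Rsum m (fun j => Cnorm2 (v K j))) (Rsum m (fun j => Cnorm2 (w j))).
Proof. induction m; intros Hv. simpl; apply Un_cv_const. simpl. apply CV_plus.
    apply IHm. intros; apply Hv; lia. destruct (Hv m) as [H1 H2]; [lia|]. unfold Cnorm2. apply CV_plus; apply CV_mult; auto. Qed.

Lemma opnorm_limit n (Z : nat -> mat) L c :
  (forall j k, (j < n)%nat -> (k < n)%nat -> Ccv (fun K => Z K j k) (L j k)) ->
  (forall K, opnorm_le n (Z K) c) -> opnorm_le n L c.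
Proof. intros HL HZ x.
  assert (Hv : forall j, (j < n)%nat -> Ccv (fun K => matvec n (Z K) x j) (matvec n L x j)).
  { intros. unfold matvec. apply Ccv_Csum. intros. apply Ccv_mul; auto. apply Ccv_const. }
  assert (Hs : Un_cv (fun K => Rsum n (fun j => Cnorm2 (matvec n (Z K) x j))) (Rsum n (fun j => Cnorm2 (matvec n L x j)))).
  { apply Rsum_Cnorm2_cv; auto. }
  assert (Hn : Un_cv (fun K => sqrt (Rsum n (fun j => Cnorm2 (matvec n (Z K) x j)))) (sqrt (Rsum n (fun j => Cnorm2 (matvec n L x j))))).
  { apply continuity_seq; auto. apply continuity_pt_sqrt, Rsum_Cnorm2_nonneg. }
  rewrite vnorm_eq. eapply Rle_cv_lim; [|apply Hn|apply Un_cv_const]. intros K; pose proof (HZ K x) as HK; rewrite !vnorm_eq in HK; rewrite vnorm_eq; exact HK. Qed.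

Lemma Ccv_add u v a b : Ccv u a -> Ccv v b -> Ccv (fun K => Cadd (u K) (v K)) (Cadd a b).
Proof. intros [H1 H2] [H3 H4]. split; simpl; apply CV_plus; auto. Qed.
Lemma Ccv_shift u a d : Ccv u a -> Ccv (fun K => u (d + K)%nat) a.
Proof. intros [H1 H2]. split.
  - eapply Un_cv_ext; [|apply (CV_shift' _ d _ H1)]. intros; simpl; rewrite Nat.add_comm; auto.
  - eapply Un_cv_ext; [|apply (CV_shift' _ d _ H2)]. intros; simpl; rewrite Nat.add_comm; auto. Qed.

Lemma Cabs_sin_partial_tail n X a d K j k eps : 0 <= a -> opnorm_le n X a -> (j < n)%nat -> (k < n)%nat ->
  (forall K, Rsum K (fun i => sin_term_bound a (d + i)) <= eps) ->
  Cabs (Cadd (sin_partial n (d + K) X j k) (Copp (sin_partial n d X j k))) <= eps.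
Proof. intros. rewrite sin_partial_split. unfold madd.
  replace (Cadd (Cadd (sin_partial n d X j k) (msum K (fun i => sin_term n X (d + i)) j k)) (Copp (sin_partial n d X j k)))
    with (msum K (fun i => sin_term n X (d + i)) j k) by cx_ring.
  eapply Rle_trans; [eapply opnorm_entry; [apply opnorm_sin_partial_tail; eauto|auto|auto]|]. auto. Qed.

Lemma sin_partial_cv n X a j k : 0 <= a -> opnorm_le n X a -> (j < n)%nat -> (k < n)%nat ->
  Ccv (fun K => sin_partial n K X j k) (msin n X j k).
Proof. intros Ha HX Hj Hk.
  assert (Hc : forall (pr : Cx -> R), (forall z, Rabs (pr z) <= Cabs z) -> (forall z w, pr (Cadd z (Copp w)) = pr z - pr w) ->
     Cauchy_crit (fun K => pr (sin_partial n K X j k))).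
  { intros pr Hpr Hlin e He. destruct (sin_tail_small a (e / 4) Ha) as [d Hd]; [lra|].
    exists d. intros p q Hp Hq. unfold R_dist.
    pose proof (Cabs_sin_partial_tail n X a d (p - d) j k (e/4) Ha HX Hj Hk Hd).
    pose proof (Cabs_sin_partial_tail n X a d (q - d) j k (e/4) Ha HX Hj Hk Hd).
    replace (d + (p - d))%nat with p in H by lia. replace (d + (q - d))%nat with q in H0 by lia.
    pose proof (Hpr _ : Rabs (pr (Cadd (sin_partial n p X j k) (Copp (sin_partial n d X j k)))) <= _).
    pose proof (Hpr (Cadd (sin_partial n q X j k) (Copp (sin_partial n d X j k)))).
    rewrite Hlin in H1, H2.
    replace (pr (sin_partial n p X j k) - pr (sin_partial n q X j k))
      with ((pr (sin_partial n p X j k) - pr (sin_partial n d X j k))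
            - (pr (sin_partial n q X j k) - pr (sin_partial n d X j k))) by ring.
    eapply Rle_lt_trans; [apply Rabs_triang|]. rewrite Rabs_Ropp. lra. }
  destruct (Rcomplete.R_complete _ (Hc fst Cabs_fst ltac:(intros; simpl; ring))) as [l1 H1].
  destruct (Rcomplete.R_complete _ (Hc snd Cabs_snd ltac:(intros; simpl; ring))) as [l2 H2].
  assert (Ccv (fun K => sin_partial n K X j k) (l1, l2)) by (split; auto).
  unfold msin. rewrite (Clim_spec _ (l1, l2)); auto. Qed.

Lemma opnorm_msin_sub_partial n X a d tau : 0 <= a -> opnorm_le n X a ->
  (forall K, Rsum K (fun i => sin_term_bound a (d + i)) <= tau) ->
  opnorm_le n (msub (msin n X) (sin_partial n d X)) tau.
Proof. intros. apply (opnorm_limit n (fun K => msub (sin_partial n (d + K) X) (sin_partial n d X))).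
  - intros. unfold msub, madd, mscale. apply Ccv_add. apply (Ccv_shift (fun K => sin_partial n K X j k)). apply sin_partial_cv with a; auto.
    apply Ccv_const.
  - intros K. apply (opnorm_ext n (msum K (fun i => sin_term n X (d + i)%nat))).
    + unfold mat_eq; intros. unfold msub. rewrite sin_partial_split. unfold madd, mscale. cx_ring.
    + eapply opnorm_mono; [apply H1|]. apply opnorm_sin_partial_tail; auto. Qed.

(** * Perturbation of the matrix sine *)

Lemma msub_mmul_split n X A Y B :
  msub (mmul n X A) (mmul n Y B) = madd (mmul n X (msub A B)) (mmul n (msub X Y) B).
Proof. extensionality j; extensionality k. unfold msub, madd, mscale, mmul.
  rewrite <- Csum_scale, <- !Csum_add. apply Csum_ext; intros. cx_ring. Qed.

Lemma mpow_perturb n X Y a r R0 E0 e : 0 <= a -> 0 <= e -> opnorm_le n X a -> opnorm_le n Y a ->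
  mat_eq n (msub X Y) (madd R0 E0) -> low_rank n R0 r -> opnorm_le n E0 e ->
  forall q, exists R E, mat_eq n (msub (mpow n X q) (mpow n Y q)) (madd R E) /\
    low_rank n R (q * r) /\ opnorm_le n E (INR q * (a + 1) ^ q * e).
Proof. intros Ha He HX HY HD HR HE. induction q.
  - exists mzero, mzero. split; [|split]. unfold mat_eq, msub, madd, mscale, mzero; intros; simpl; cx_ring.
    apply low_rank_zero. eapply opnorm_mono; [|apply opnorm_zero]. simpl; lra.
  - destruct IHq as [R [E [H1 [H2 H3]]]].
    exists (madd (mmul n X R) (mmul n R0 (mpow n Y q))), (madd (mmul n X E) (mmul n E0 (mpow n Y q))).
    split; [|split].
    + simpl. rewrite msub_mmul_split. eapply mat_eq_trans.
      apply madd_ext; apply mmul_ext; [apply mat_eq_refl|exact H1|exact HD|apply mat_eq_refl].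
      rewrite mmul_madd_l, mmul_madd_r. unfold mat_eq, madd; intros; cx_ring.
    + replace (S q * r)%nat with (q * r + r)%nat by lia. apply low_rank_add.
      apply low_rank_mul_l; auto. apply low_rank_mul_r; auto.
    + apply (opnorm_mono _ _ (a * (INR q * (a+1)^q * e) + e * a^q));
        [|apply opnorm_add; [apply opnorm_mul; [exact Ha|exact HX|exact H3]
                            | apply opnorm_mul; [exact He|exact HE|apply opnorm_mpow; [exact Ha|exact HY]]]].
      rewrite S_INR. simpl.
      assert (Hp : a ^ q <= (a + 1) ^ q) by (apply pow_incr; lra).
      assert (Hp0 : 0 <= a ^ q) by (apply pow_le; auto).
      assert (0 <= INR q) by apply pos_INR.
      assert (0 <= INR q * (a + 1) ^ q * e) by (apply Rmult_le_pos; [apply Rmult_le_pos|]; auto; apply pow_le; lra).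
      assert (e * a ^ q <= e * ((a + 1) * (a + 1) ^ q)) by (apply Rmult_le_compat_l; auto; nra).
      set (P := (a + 1) ^ q) in *.
      replace ((INR q + 1) * ((a + 1) * P) * e) with (a * (INR q * P * e) + (INR q * P * e + e * ((a + 1) * P))) by ring.
      lra. Qed.

Definition sin_perturb_weight (a : R) (d : nat) : R := Rsum d (fun m => INR (2 * m + 1) * (a + 1) ^ (2 * m + 1)).

Lemma sin_partial_perturb n X Y a r R0 E0 e : 0 <= a -> 0 <= e -> opnorm_le n X a -> opnorm_le n Y a ->
  mat_eq n (msub X Y) (madd R0 E0) -> low_rank n R0 r -> opnorm_le n E0 e ->
  forall d, exists R E, mat_eq n (msub (sin_partial n d X) (sin_partial n d Y)) (madd R E) /\
    low_rank n R (d * (2 * d + 1) * r) /\ opnorm_le n E (e * sin_perturb_weight a d).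
Proof. intros Ha He HX HY HD HR HE. induction d.
  - exists mzero, mzero. split; [|split]. unfold mat_eq, msub, madd, mscale, mzero, sin_partial, msum; intros; simpl; cx_ring.
    apply low_rank_zero. eapply opnorm_mono; [|apply opnorm_zero]. unfold sin_perturb_weight; simpl; lra.
  - destruct IHd as [R [E [H1 [H2 H3]]]].
    destruct (mpow_perturb n X Y a r R0 E0 e Ha He HX HY HD HR HE (2 * d + 1)) as [R' [E' [H4 [H5 H6]]]].
    exists (madd R (mscale (sin_coef d) R')), (madd E (mscale (sin_coef d) E')). split; [|split].
    + unfold mat_eq; intros. change (sin_partial n (S d) X) with (madd (sin_partial n d X) (sin_term n X d)).
      change (sin_partial n (S d) Y) with (madd (sin_partial n d Y) (sin_term n Y d)). unfold sin_term.
      unfold mat_eq in H1, H4. specialize (H1 j k H H0). specialize (H4 j k H H0).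
      unfold msub, madd, mscale in *.
      transitivity (Cadd (Cadd (sin_partial n d X j k) (Cscale (-1) (sin_partial n d Y j k)))
        (Cscale (sin_coef d) (Cadd (mpow n X (2 * d + 1) j k) (Cscale (-1) (mpow n Y (2 * d + 1) j k))))). cx_ring.
      rewrite H1, H4. cx_ring.
    + apply (low_rank_mono _ _ (d * (2 * d + 1) * r + (2 * d + 1) * r)); [nia|apply low_rank_add; [exact H2|apply low_rank_scale; exact H5]].
    + apply (opnorm_mono _ _ (e * sin_perturb_weight a d
                              + Rabs (sin_coef d) * (INR (2 * d + 1) * (a + 1) ^ (2 * d + 1) * e)));
        [|apply opnorm_add; [exact H3|apply opnorm_scale; exact H6]].
      change (sin_perturb_weight a (S d)) with (sin_perturb_weight a d + INR (2*d+1) * (a+1)^(2*d+1)). pose proof (sin_coef_abs d).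
      assert (0 <= INR (2 * d + 1) * (a + 1) ^ (2 * d + 1) * e).
      { apply Rmult_le_pos; auto. apply Rmult_le_pos. apply pos_INR. apply pow_le; lra. }
      pose proof (Rabs_pos (sin_coef d)).
      set (T := INR (2 * d + 1) * (a + 1) ^ (2 * d + 1) * e) in *.
      assert (Rabs (sin_coef d) * T <= T) by nra.
      replace (e * (sin_perturb_weight a d + INR (2 * d + 1) * (a + 1) ^ (2 * d + 1))) with (e * sin_perturb_weight a d + T) by (unfold T; ring). lra. Qed.

Lemma msin_perturb n X Y a r R0 E0 e d tau : 0 <= a -> 0 <= e -> opnorm_le n X a -> opnorm_le n Y a ->
  mat_eq n (msub X Y) (madd R0 E0) -> low_rank n R0 r -> opnorm_le n E0 e ->
  (forall K, Rsum K (fun i => sin_term_bound a (d + i)) <= tau) ->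
  exists R E, mat_eq n (msub (msin n X) (msin n Y)) (madd R E) /\
    low_rank n R (d * (2 * d + 1) * r) /\ opnorm_le n E (e * sin_perturb_weight a d + (tau + tau)).
Proof. intros Ha He HX HY HD HR HE Ht.
  destruct (sin_partial_perturb n X Y a r R0 E0 e Ha He HX HY HD HR HE d) as [R [E [H1 [H2 H3]]]].
  exists R, (madd E (msub (msub (msin n X) (sin_partial n d X)) (msub (msin n Y) (sin_partial n d Y)))).
  split; [|split]; auto.
  - unfold mat_eq; intros. unfold mat_eq in H1; specialize (H1 j k H H0). unfold msub, madd, mscale in *.
    transitivity (Cadd (Cadd (sin_partial n d X j k) (Cscale (-1) (sin_partial n d Y j k)))
      (Cadd (Cadd (msin n X j k) (Cscale (-1) (sin_partial n d X j k))) (Cscale (-1) (Cadd (msin n Y j k) (Cscale (-1) (sin_partial n d Y j k)))))). cx_ring.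
    rewrite H1. cx_ring.
  - apply opnorm_add; auto. apply opnorm_sub; [apply (opnorm_msin_sub_partial n X a d tau)|apply (opnorm_msin_sub_partial n Y a d tau)]; auto. Qed.

Lemma msin_perturb_small a tau : 0 <= a -> 0 < tau -> exists (d : nat) (delta : R), 0 < delta /\
  forall n X Y r R0 E0, opnorm_le n X a -> opnorm_le n Y a ->
    mat_eq n (msub X Y) (madd R0 E0) -> low_rank n R0 r -> opnorm_le n E0 delta ->
    exists R E, mat_eq n (msub (msin n X) (msin n Y)) (madd R E) /\
      low_rank n R (d * (2 * d + 1) * r) /\ opnorm_le n E tau.
Proof.
  intros Ha Htau.
  destruct (sin_tail_small a (tau / 4) Ha ltac:(lra)) as [d Hd].
  set (Q := sin_perturb_weight a d).
  assert (HQ : 0 <= Q).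
  { unfold Q, sin_perturb_weight. apply Rsum_nonneg. intros.
    apply Rmult_le_pos; [apply pos_INR | apply pow_le; lra]. }
  exists d, (tau / (2 * (Q + 1))). split; [apply Rdiv_lt_0_compat; lra|].
  intros n X Y r R0 E0 HX HY HD HR0 HE0.
  assert (Hdelta : 0 <= tau / (2 * (Q + 1))) by (left; apply Rdiv_lt_0_compat; lra).
  destruct (msin_perturb n X Y a r R0 E0 _ d (tau / 4) Ha Hdelta HX HY HD HR0 HE0 Hd) as [R [E [HS [HR HE]]]].
  exists R, E. split; [exact HS | split; [exact HR|]].
  eapply opnorm_mono; [|exact HE]. fold Q.
  replace (tau / (2 * (Q + 1)) * Q) with (tau / 2 - tau / (2 * (Q + 1))) by (field; lra).
  lra.
Qed.

Lemma cont_plus f g : continuity f -> continuity g -> continuity (fun t => f t + g t).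
Proof. intros; apply (continuity_plus f g); auto. Qed.
Lemma cont_mult f g : continuity f -> continuity g -> continuity (fun t => f t * g t).
Proof. intros; apply (continuity_mult f g); auto. Qed.
Lemma cont_opp f : continuity f -> continuity (fun t => - f t).
Proof. intros; apply (continuity_opp f); auto. Qed.
Lemma cont_const c : continuity (fun _ => c).
Proof. apply continuity_const. intros x y; auto. Qed.
Lemma cont_id : continuity (fun t => t).
Proof. apply derivable_continuous, derivable_id. Qed.
Lemma cont_minus f g : continuity f -> continuity g -> continuity (fun t => f t - g t).
Proof. intros; apply (continuity_minus f g); auto. Qed.
Lemma cont_cos_aff c b : continuity (fun t => cos (c * t + b)).
Proof. intros x. apply (continuity_pt_comp (fun t => c * t + b) cos).
  apply cont_plus. apply cont_mult. apply cont_const. apply cont_id. apply cont_const. apply continuity_cos. Qed.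
Lemma cont_sin_aff c b : continuity (fun t => sin (c * t + b)).
Proof. intros x. apply (continuity_pt_comp (fun t => c * t + b) sin).
  apply cont_plus. apply cont_mult. apply cont_const. apply cont_id. apply cont_const. apply continuity_sin. Qed.
Lemma cont_sqrt_nonneg f : continuity f -> (forall t, 0 <= f t) -> continuity (fun t => sqrt (f t)).
Proof. intros H H0 x. apply (continuity_pt_comp f sqrt). apply H. apply continuity_pt_sqrt, H0. Qed.

Definition Ccont (h : R -> Cx) : Prop := continuity (fun t => fst (h t)) /\ continuity (fun t => snd (h t)).
Lemma Ccont_const c : Ccont (fun _ => c).
Proof. split; apply cont_const. Qed.
Lemma Ccont_add g h : Ccont g -> Ccont h -> Ccont (fun t => Cadd (g t) (h t)).
Proof. intros [] []; split; simpl; apply cont_plus; auto. Qed.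
Lemma Ccont_mul g h : Ccont g -> Ccont h -> Ccont (fun t => Cmul (g t) (h t)).
Proof. intros [] []; split; simpl. apply cont_minus; apply cont_mult; auto. apply cont_plus; apply cont_mult; auto. Qed.
Lemma Ccont_scale r h : Ccont h -> Ccont (fun t => Cscale r (h t)).
Proof. intros []; split; simpl; apply cont_mult; auto; apply cont_const. Qed.
Lemma Ccont_conj h : Ccont h -> Ccont (fun t => Cconj (h t)).
Proof. intros []; split; simpl; auto. apply cont_opp; auto. Qed.
Lemma Ccont_opp h : Ccont h -> Ccont (fun t => Copp (h t)).
Proof. intros []; split; simpl; apply cont_opp; auto. Qed.
Lemma Ccont_expi_affine c b : Ccont (fun t => Cexpi (c * t + b)).
Proof. split; simpl. apply cont_cos_aff. apply cont_sin_aff. Qed.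
Lemma Ccont_sum n (F : nat -> R -> Cx) : (forall i, (i < n)%nat -> Ccont (F i)) -> Ccont (fun t => Csum n (fun i => F i t)).
Proof. induction n; intros; simpl. apply Ccont_const. apply Ccont_add. apply IHn; intros; apply H; lia. apply H; lia. Qed.
Lemma Ccont_abs h : Ccont h -> continuity (fun t => Cabs (h t)).
Proof. intros []. unfold Cabs. apply cont_sqrt_nonneg. unfold Cnorm2. apply cont_plus; apply cont_mult; auto.
  intros; apply Cnorm2_nonneg. Qed.
Lemma Ccont_ext g h : (forall t, g t = h t) -> Ccont g -> Ccont h.
Proof. intros. replace h with g; auto. extensionality t; auto. Qed.

Definition int_pi (g : R -> R) : R := RInt g (- PI) PI.

Lemma ex_int_pi g : continuity g -> ex_RInt g (- PI) PI.
Proof. intros. apply (ex_RInt_continuous (V:=R_CompleteNormedModule)). intros. apply continuity_pt_filterlim. apply H. Qed.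
Lemma int_pi_plus f g : continuity f -> continuity g -> int_pi (fun x => f x + g x) = int_pi f + int_pi g.
Proof. intros. exact (RInt_plus f g _ _ (ex_int_pi f H) (ex_int_pi g H0)). Qed.
Lemma int_pi_scal c f : continuity f -> int_pi (fun x => c * f x) = c * int_pi f.
Proof. intros. exact (RInt_scal f _ _ c (ex_int_pi f H)). Qed.
Lemma int_pi_const c : int_pi (fun _ => c) = 2 * PI * c.
Proof. unfold int_pi. rewrite (RInt_const (- PI) PI c). unfold scal; simpl. unfold mult; simpl. ring. Qed.
Lemma int_pi_le f g : continuity f -> continuity g -> (forall x, - PI <= x <= PI -> f x <= g x) -> int_pi f <= int_pi g.
Proof. intros. apply RInt_le; auto. pose proof PI_RGT_0; lra. apply ex_int_pi; auto. apply ex_int_pi; auto.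
  intros; apply H1; lra. Qed.
Lemma int_pi_ext f g : (forall x, f x = g x) -> int_pi f = int_pi g.
Proof. intros. replace g with f; auto. extensionality x; auto. Qed.
Lemma int_pi_opp f : continuity f -> int_pi (fun x => - f x) = - int_pi f.
Proof. intros. rewrite (int_pi_ext _ (fun x => (-1) * f x)) by (intros; ring). rewrite int_pi_scal; auto; ring. Qed.
Lemma int_pi_minus f g : continuity f -> continuity g -> int_pi (fun x => f x - g x) = int_pi f - int_pi g.
Proof. intros. rewrite (int_pi_ext _ (fun x => f x + - g x)) by (intros; ring). rewrite int_pi_plus by (auto; apply cont_opp; auto).
  rewrite int_pi_opp by auto. ring. Qed.

Lemma Rint_int_pi g : continuity g -> Rint g (- PI) PI = int_pi g.
Proof. intros. unfold Rint.
  assert (pr : Riemann_integrable g (- PI) PI). { apply continuity_implies_RiemannInt. pose proof PI_RGT_0; lra. intros; apply H. }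
  destruct (epsilon_spec (inhabits 0) (fun l => exists pr : Riemann_integrable g (- PI) PI, RiemannInt pr = l) (ex_intro _ _ (ex_intro _ pr eq_refl))) as [pr' Hp].
  rewrite <- Hp. unfold int_pi. symmetry. apply RInt_Reals. Qed.

Definition Cint_pi (h : R -> Cx) : Cx := (int_pi (fun t => fst (h t)), int_pi (fun t => snd (h t))).
Lemma Cint_pi_add g h : Ccont g -> Ccont h -> Cint_pi (fun t => Cadd (g t) (h t)) = Cadd (Cint_pi g) (Cint_pi h).
Proof. intros [] []. unfold Cint_pi, Cadd; simpl. rewrite !int_pi_plus; auto. Qed.
Lemma Cint_pi_cmul c h : Ccont h -> Cint_pi (fun t => Cmul c (h t)) = Cmul c (Cint_pi h).
Proof. intros []. unfold Cint_pi, Cmul; simpl. rewrite int_pi_minus, int_pi_plus, !int_pi_scal; auto;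
  try apply cont_mult; auto; apply cont_const. Qed.
Lemma Cint_pi_ext g h : (forall t, g t = h t) -> Cint_pi g = Cint_pi h.
Proof. intros. replace h with g; auto. extensionality x; auto. Qed.
Lemma Cint_pi_sum n (F : nat -> R -> Cx) : (forall i, Ccont (F i)) -> Cint_pi (fun t => Csum n (fun i => F i t)) = Csum n (fun i => Cint_pi (F i)).
Proof. induction n; intros; simpl. unfold Cint_pi, C0; simpl. rewrite !int_pi_const. f_equal; ring.
  rewrite Cint_pi_add; auto. rewrite IHn; auto. apply Ccont_sum; auto. Qed.
Lemma Cint_pi_scale r h : Ccont h -> Cint_pi (fun t => Cscale r (h t)) = Cscale r (Cint_pi h).
Proof. intros. rewrite (Cint_pi_ext _ (fun t => Cmul (RtoC r) (h t))) by (intros; apply Cscale_mul).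
  rewrite Cint_pi_cmul; auto. symmetry; apply Cscale_mul. Qed.

Lemma Cint_pi_abs h : Ccont h -> Cabs (Cint_pi h) <= int_pi (fun t => Cabs (h t)).
Proof. intros Hc. destruct (Req_dec (Cabs (Cint_pi h)) 0) as [E|E].
  { rewrite E. replace 0 with (int_pi (fun _ => 0)) by (rewrite int_pi_const; ring). apply int_pi_le.
    apply cont_const. apply Ccont_abs; auto. intros; apply Cabs_nonneg. }
  set (w := Cscale (/ Cabs (Cint_pi h)) (Cconj (Cint_pi h))).
  assert (Hw : Cabs w = 1). { unfold w. rewrite Cabs_scale, Cabs_conj, Rabs_inv.
    rewrite Rabs_right by (apply Rle_ge, Cabs_nonneg). field; auto. }
  assert (Hwz : Cmul w (Cint_pi h) = RtoC (Cabs (Cint_pi h))).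
  { unfold w. pose proof (Cabs_sq (Cint_pi h)). revert E H. generalize (Cabs (Cint_pi h)). intros s E H. destruct (Cint_pi h) as [u v].
    unfold Cnorm2 in *; simpl in *.
    unfold Cscale, Cmul, RtoC, Cconj; simpl. apply Cpair_eq; simpl.
    replace (/ s * u * u - / s * - v * v) with (/ s * (u * u + v * v)) by ring. rewrite <- H. field; auto.
    ring. }
  rewrite <- Cint_pi_cmul in Hwz by auto.
  assert (Cabs (Cint_pi h) = int_pi (fun t => fst (Cmul w (h t)))).
  { change (int_pi (fun t => fst (Cmul w (h t)))) with (fst (Cint_pi (fun t => Cmul w (h t)))). rewrite Hwz; auto. }
  rewrite H. apply int_pi_le. apply (Ccont_mul (fun _ => w) h); auto. apply Ccont_const. apply Ccont_abs; auto.
  intros. eapply Rle_trans. apply Cfst_le_abs. rewrite Cabs_mul, Hw; lra. Qed.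

Lemma Cexpi_add a b : Cmul (Cexpi a) (Cexpi b) = Cexpi (a + b).
Proof. unfold Cexpi, Cmul; simpl. rewrite cos_plus, sin_plus. apply Cpair_eq; simpl; ring. Qed.
Lemma Cexpi_conj a : Cconj (Cexpi a) = Cexpi (- a).
Proof. unfold Cexpi, Cconj; simpl. rewrite cos_neg, sin_neg; auto. Qed.
Lemma Cabs_expi a : Cabs (Cexpi a) = 1.
Proof. unfold Cabs, Cexpi, Cnorm2; simpl. rewrite <- sqrt_1. f_equal. pose proof (sin2_cos2 a). unfold Rsqr in H; lra. Qed.

Lemma int_pi_cos_mul (m : Z) : m <> 0%Z -> int_pi (fun t => cos (IZR m * t)) = 0.
Proof. intros. assert (Hm : IZR m <> 0) by (apply not_0_IZR; auto).
  unfold int_pi. apply is_RInt_unique.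
  replace 0 with (minus (sin (IZR m * PI) / IZR m) (sin (IZR m * - PI) / IZR m)).
  apply (is_RInt_derive (fun t => sin (IZR m * t) / IZR m)).
  - intros. auto_derive; auto. field; auto.
  - intros. apply continuity_pt_filterlim. pose proof (cont_cos_aff (IZR m) 0 x) as Hc.
    eapply continuity_pt_ext; [|exact Hc]. intros; simpl; rewrite Rplus_0_r; auto.
  - rewrite !sin_eq_0_1. unfold minus, plus, opp; simpl. unfold Rdiv; ring.
    exists (- m)%Z. rewrite opp_IZR; ring. exists m; auto. Qed.
Lemma int_pi_sin_mul (m : Z) : int_pi (fun t => sin (IZR m * t)) = 0.
Proof. destruct (Z.eq_dec m 0). subst. rewrite (int_pi_ext _ (fun _ => 0)). rewrite int_pi_const; ring. intros; simpl; rewrite Rmult_0_l, sin_0; auto.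
  assert (Hm : IZR m <> 0) by (apply not_0_IZR; auto).
  unfold int_pi. apply is_RInt_unique.
  replace 0 with (minus (- cos (IZR m * PI) / IZR m) (- cos (IZR m * - PI) / IZR m)).
  apply (is_RInt_derive (fun t => - cos (IZR m * t) / IZR m)).
  - intros. auto_derive; auto. field; auto.
  - intros. apply continuity_pt_filterlim. pose proof (cont_sin_aff (IZR m) 0 x) as Hc; eapply continuity_pt_ext; [|exact Hc]; intros; simpl; rewrite Rplus_0_r; auto.
  - replace (IZR m * - PI) with (- (IZR m * PI)) by ring. rewrite cos_neg. unfold minus, plus, opp; simpl. field; auto. Qed.

Lemma Cint_pi_expi (m : Z) : Cint_pi (fun t => Cexpi (IZR m * t)) = if Z.eqb m 0 then (2 * PI, 0) else C0.
Proof. unfold Cint_pi, Cexpi; simpl. destruct (Z.eqb_spec m 0).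
  - subst. rewrite (int_pi_ext _ (fun _ => 1)), (int_pi_ext (fun t => sin _) (fun _ => 0)).
    rewrite !int_pi_const. f_equal; ring. intros; rewrite Rmult_0_l, sin_0; auto. intros; rewrite Rmult_0_l, cos_0; auto.
  - rewrite int_pi_cos_mul, int_pi_sin_mul; auto. Qed.

Lemma Ccont_expi_mul c : Ccont (fun t => Cexpi (c * t)).
Proof. apply (Ccont_ext (fun t => Cexpi (c * t + 0))). intros; rewrite Rplus_0_r; auto. apply Ccont_expi_affine. Qed.

Lemma fourier_Cint_pi f k : Ccont f ->
  fourier f k = Cscale (/ (2 * PI)) (Cint_pi (fun t => Cmul (f t) (Cexpi (- IZR k * t)))).
Proof. intros [H1 H2]. unfold fourier, Cint_pi. simpl.
  destruct (Ccont_mul f (fun t => Cexpi (- IZR k * t))) as [H3 H4]; [split; auto|apply Ccont_expi_mul|].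
  rewrite !Rint_int_pi; auto. Qed.

Lemma fourier_add f g k : Ccont f -> Ccont g -> fourier (fun t => Cadd (f t) (g t)) k = Cadd (fourier f k) (fourier g k).
Proof. intros. rewrite !fourier_Cint_pi; auto; [|apply Ccont_add; auto].
  rewrite (Cint_pi_ext _ (fun t => Cadd (Cmul (f t) (Cexpi (- IZR k * t))) (Cmul (g t) (Cexpi (- IZR k * t))))) by (intros; cx_ring).
  rewrite Cint_pi_add by (apply Ccont_mul; auto; apply Ccont_expi_mul). cx_ring. Qed.

Lemma fourier_monomial (b : Cx) (m k : Z) : fourier (fun t => Cmul b (Cexpi (IZR m * t))) k = if Z.eqb k m then b else C0.
Proof. rewrite fourier_Cint_pi by (apply Ccont_mul; [apply Ccont_const|apply Ccont_expi_mul]).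
  rewrite (Cint_pi_ext _ (fun t => Cmul b (Cexpi (IZR (m - k) * t)))).
  rewrite Cint_pi_cmul by apply Ccont_expi_mul. rewrite Cint_pi_expi.
  destruct (Z.eqb_spec (m - k) 0); destruct (Z.eqb_spec k m); try lia.
  - pose proof PI_RGT_0. cx_expand. apply Cpair_eq; simpl; field; lra.
  - cx_ring.
  - intros. rewrite Cmul_assoc, Cexpi_add. replace (IZR (m - k) * t) with (IZR m * t + - IZR k * t) by (rewrite minus_IZR; ring). reflexivity. Qed.

Lemma fourier_zero k : fourier (fun _ => C0) k = C0.
Proof. rewrite fourier_Cint_pi by apply Ccont_const. unfold Cint_pi. simpl.
  assert (forall f, (forall t, f t = 0) -> int_pi f = 0). { intros. rewrite (int_pi_ext f (fun _ => 0)) by auto. rewrite int_pi_const; ring. }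
  rewrite !H by (intros; ring). cx_ring. Qed.

Lemma Cabs_fourier_le f B : Ccont f -> (forall t, - PI <= t <= PI -> Cabs (f t) <= B) -> forall z, Cabs (fourier f z) <= B.
Proof. intros Hf Hb z. pose proof PI_RGT_0. rewrite fourier_Cint_pi by auto. rewrite Cabs_scale.
  rewrite Rabs_right by (apply Rle_ge; left; apply Rinv_0_lt_compat; lra).
  assert (Hc : Ccont (fun t => Cmul (f t) (Cexpi (- IZR z * t)))) by (apply Ccont_mul; auto; apply Ccont_expi_mul).
  eapply Rle_trans. apply Rmult_le_compat_l. left; apply Rinv_0_lt_compat; lra. apply Cint_pi_abs; auto.
  eapply Rle_trans. apply Rmult_le_compat_l. left; apply Rinv_0_lt_compat; lra.
  apply (int_pi_le _ (fun _ => B)). apply Ccont_abs; auto. apply cont_const.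
  intros. rewrite Cabs_mul, Cabs_expi, Rmult_1_r. auto.
  rewrite int_pi_const. right; field; lra. Qed.

(** * Toeplitz minus optimal circulant for trigonometric polynomials *)

Definition band (c : Z) (w : Cx) : mat := fun j l => if Z.eqb (Z.of_nat j - Z.of_nat l) c then w else C0.

Lemma Cnorm2_sum_single n (p : nat -> bool) (x : nat -> Cx) : (forall l1 l2, p l1 = true -> p l2 = true -> l1 = l2) ->
  Cnorm2 (Csum n (fun l => if p l then x l else C0)) <= Rsum n (fun l => if p l then Cnorm2 (x l) else 0).
Proof. intros Hu. induction n; simpl. unfold Cnorm2, C0; simpl; lra.
  destruct (p n) eqn:E.
  - rewrite Csum_zero', (Rsum_ext n _ (fun _ => 0)), Rsum_zero, Cadd_0_l. lra.
    intros. destruct (p i) eqn:E2; auto. assert (i = n) by (apply Hu; auto). lia.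
    intros. destruct (p i) eqn:E2; auto. assert (i = n) by (apply Hu; auto). lia.
  - rewrite Cadd_0_r. lra. Qed.
Lemma Rsum_single_le_1 n (p : nat -> bool) : (forall l1 l2, p l1 = true -> p l2 = true -> l1 = l2) ->
  Rsum n (fun l => if p l then 1 else 0) <= 1.
Proof. intros Hu. induction n; simpl. lra. destruct (p n) eqn:E.
  - rewrite (Rsum_ext n _ (fun _ => 0)), Rsum_zero. lra.
    intros. destruct (p i) eqn:E2; auto. assert (i = n) by (apply Hu; auto). lia.
  - lra. Qed.

Lemma opnorm_band n c w : opnorm_le n (band c w) (Cabs w).
Proof. intros x.
  rewrite (vnorm_ext n _ (fun j => Cmul w (Csum n (fun l => if Z.eqb (Z.of_nat j - Z.of_nat l) c then x l else C0)))).
  rewrite vnorm_cmul. apply Rmult_le_compat_l. apply Cabs_nonneg. rewrite !vnorm_eq. apply sqrt_le_1_alt.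
  eapply Rle_trans. apply Rsum_le. intros j Hj. apply Cnorm2_sum_single.
  intros l1 l2 E1 E2. apply Z.eqb_eq in E1, E2. lia.
  rewrite Rsum_swap. apply Rsum_le. intros l Hl.
  rewrite (Rsum_ext n _ (fun j => Cnorm2 (x l) * (if Z.eqb (Z.of_nat j - Z.of_nat l) c then 1 else 0))).
  rewrite Rsum_scal. pose proof (Cnorm2_nonneg (x l)).
  assert (Rsum n (fun j => if Z.eqb (Z.of_nat j - Z.of_nat l) c then 1 else 0) <= 1).
  { apply Rsum_single_le_1. intros j1 j2 E1 E2. apply Z.eqb_eq in E1, E2. lia. }
  nra. intros. destruct (Z.eqb _ _); ring.
  intros. unfold matvec, band. rewrite <- Csum_mul_l. apply Csum_ext; intros. destruct (Z.eqb _ _); cx_ring. Qed.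

Lemma low_rank_band n c w r : (n <= r + Z.abs_nat c)%nat -> low_rank n (band c w) r.
Proof. intros Hr. destruct (Z_le_gt_dec 0 c) as [Hc|Hc].
  - set (a := Z.to_nat c).
    exists (fun i j => if Nat.eqb j (i + a) then w else C0), (fun i l => if Nat.eqb l i then C1 else C0).
    unfold mat_eq, band; intros j l Hj Hl.
    rewrite (Csum_ext r _ (fun i => if Nat.eqb i l then (if Nat.eqb j (l + a) then w else C0) else C0)).
    rewrite Csum_delta. destruct (Z.eqb_spec (Z.of_nat j - Z.of_nat l) c); destruct (Nat.ltb_spec l r);
      destruct (Nat.eqb_spec j (l + a)); unfold a in *; auto; try lia.
    intros. destruct (Nat.eqb_spec i l); destruct (Nat.eqb_spec l i); destruct (Nat.eqb_spec j (i + a)); destruct (Nat.eqb_spec j (l + a)); subst; try lia; cx_ring.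
  - set (a := Z.to_nat (- c)).
    exists (fun i j => if Nat.eqb j i then w else C0), (fun i l => if Nat.eqb l (i + a) then C1 else C0).
    unfold mat_eq, band; intros j l Hj Hl.
    rewrite (Csum_ext r _ (fun i => if Nat.eqb i j then (if Nat.eqb l (j + a) then w else C0) else C0)).
    rewrite Csum_delta. destruct (Z.eqb_spec (Z.of_nat j - Z.of_nat l) c); destruct (Nat.ltb_spec j r);
      destruct (Nat.eqb_spec l (j + a)); unfold a in *; auto; try lia.
    intros. destruct (Nat.eqb_spec i j); destruct (Nat.eqb_spec j i); destruct (Nat.eqb_spec l (i + a)); destruct (Nat.eqb_spec l (j + a)); subst; try lia; cx_ring. Qed.

(* For n = 0 the bound c / INR 0 = 0 is harmless, all 0 x 0 matrices having norm 0. *)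
Definition toeplitz_circ_close (p : R -> Cx) (r : nat) (c : R) : Prop :=
  Ccont p /\ 0 <= c /\ forall n, exists R E, mat_eq n (msub (toeplitz p n) (opt_circ p n)) (madd R E) /\
    low_rank n R r /\ opnorm_le n E (c / INR n).

Lemma opnorm_dim0 X c : opnorm_le 0 X c.
Proof. intros x. rewrite !vnorm_eq. simpl. rewrite sqrt_0. lra. Qed.

Lemma toeplitz_add p q n : Ccont p -> Ccont q -> toeplitz (fun t => Cadd (p t) (q t)) n = madd (toeplitz p n) (toeplitz q n).
Proof. intros. extensionality j; extensionality k. unfold toeplitz, madd. apply fourier_add; auto. Qed.
Lemma opt_circ_add p q n : Ccont p -> Ccont q -> opt_circ (fun t => Cadd (p t) (q t)) n = madd (opt_circ p n) (opt_circ q n).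
Proof. intros. extensionality j; extensionality k. unfold opt_circ, opt_circ_coef, madd. rewrite !fourier_add by auto. cx_ring. Qed.

Lemma toeplitz_circ_close_mono p r c r' c' : (r <= r')%nat -> c <= c' -> toeplitz_circ_close p r c -> toeplitz_circ_close p r' c'.
Proof. intros Hr Hc [Hp [Hc0 H]]. split; auto. split; [lra|]. intros n. destruct (H n) as [R [E [H1 [H2 H3]]]].
  exists R, E. split; auto. split. apply low_rank_mono with r; auto.
  destruct n. apply opnorm_dim0. apply opnorm_mono with (c / INR (S n)); auto.
  pose proof (lt_0_INR (S n) ltac:(lia)). unfold Rdiv. apply Rmult_le_compat_r; auto. left; apply Rinv_0_lt_compat; auto. Qed.

Lemma toeplitz_circ_close_add p q r s c d : toeplitz_circ_close p r c -> toeplitz_circ_close q s d -> toeplitz_circ_close (fun t => Cadd (p t) (q t)) (r + s) (c + d).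
Proof. intros [Hp [Hc H]] [Hq [Hd H']]. split; [apply Ccont_add; auto|]. split; [lra|]. intros n.
  destruct (H n) as [R [E [H1 [H2 H3]]]]. destruct (H' n) as [R' [E' [H1' [H2' H3']]]].
  exists (madd R R'), (madd E E'). split; [|split].
  - rewrite toeplitz_add, opt_circ_add by auto. unfold mat_eq in *; intros. specialize (H1 j k H0 H4). specialize (H1' j k H0 H4).
    unfold msub, madd, mscale in *.
    transitivity (Cadd (Cadd (toeplitz p n j k) (Cscale (-1) (opt_circ p n j k)))
                       (Cadd (toeplitz q n j k) (Cscale (-1) (opt_circ q n j k)))). cx_ring.
    rewrite H1, H1'. cx_ring.
  - apply low_rank_add; auto.
  - replace ((c + d) / INR n) with (c / INR n + d / INR n) by (unfold Rdiv; ring). apply opnorm_add; auto. Qed.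

Lemma toeplitz_circ_close_zero : toeplitz_circ_close (fun _ => C0) 0 0.
Proof. split; [apply Ccont_const|]. split; [lra|]. intros n. exists mzero, mzero. split; [|split].
  - unfold mat_eq, msub, madd, mscale, mzero, toeplitz, opt_circ, opt_circ_coef; intros. rewrite !fourier_zero. cx_ring.
  - apply low_rank_zero.
  - unfold Rdiv; rewrite Rmult_0_l; apply opnorm_zero. Qed.

Lemma toeplitz_circ_close_ext p q r c : (forall t, p t = q t) -> toeplitz_circ_close p r c -> toeplitz_circ_close q r c.
Proof. intros. replace q with p; auto. extensionality t; auto. Qed.

Lemma toeplitz_circ_close_sum L (F : nat -> R -> Cx) r c : (forall i, (i < L)%nat -> toeplitz_circ_close (F i) r c) ->
  toeplitz_circ_close (fun t => Csum L (fun i => F i t)) (L * r) (INR L * c).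
Proof. induction L; intros. simpl. apply (toeplitz_circ_close_ext (fun _ => C0)). auto. eapply toeplitz_circ_close_mono; [| |apply toeplitz_circ_close_zero]; lia || lra.
  simpl Csum. replace (S L * r)%nat with (L * r + r)%nat by lia. rewrite S_INR.
  replace ((INR L + 1) * c) with (INR L * c + c) by ring. apply toeplitz_circ_close_add. apply IHL; intros; apply H; lia. apply H; lia. Qed.

Lemma Zmod_small_signed (z n : Z) : (0 < n)%Z -> (- n < z < n)%Z -> Z.modulo z n = if Z.ltb z 0 then (z + n)%Z else z.
Proof. intros. destruct (Z.ltb_spec z 0). rewrite <- (Z.mod_add z 1 n) by lia. rewrite Z.mul_1_l. apply Z.mod_small; lia.
  apply Z.mod_small; lia. Qed.

(* For |k| < n, A_n - c_n of b e^{ikt} is |k| b / n on the k-th diagonal and -(n - |k|) b / n on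
   the diagonal k -+ n, which has only |k| entries. *)
Lemma toeplitz_circ_close_monomial (b : Cx) (k : Z) : toeplitz_circ_close (fun t => Cmul b (Cexpi (IZR k * t))) (Z.abs_nat k) (Cabs b * IZR (Z.abs k)).
Proof. split; [apply Ccont_mul; [apply Ccont_const|apply Ccont_expi_mul]|].
  split. apply Rmult_le_pos. apply Cabs_nonneg. apply IZR_le; lia.
  intros n. destruct (le_lt_dec n (Z.abs_nat k)) as [Hnk|Hnk].
  - exists (msub (toeplitz (fun t => Cmul b (Cexpi (IZR k * t))) n) (opt_circ (fun t => Cmul b (Cexpi (IZR k * t))) n)), mzero.
    split; [|split]. unfold mat_eq, madd, mzero; intros; cx_ring. apply low_rank_mono with n; auto. apply low_rank_full.
    eapply opnorm_mono; [|apply opnorm_zero]. destruct n. unfold Rdiv; simpl; rewrite Rinv_0; lra.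
    apply Rmult_le_pos. apply Rmult_le_pos. apply Cabs_nonneg. apply IZR_le; lia. left; apply Rinv_0_lt_compat, lt_0_INR; lia.
  - assert (Hn : INR n <> 0) by (apply not_0_INR; lia).
    assert (HnZ : IZR (Z.of_nat n) = INR n) by (rewrite INR_IZR_INZ; auto).
    set (wk := Cscale (IZR (Z.abs k) / INR n) b).
    set (wc := Cscale (- (INR n - IZR (Z.abs k)) / INR n) b).
    set (cc := if Z.ltb k 0 then (k + Z.of_nat n)%Z else (k - Z.of_nat n)%Z).
    exists (band cc wc), (band k wk). split; [|split].
    + unfold mat_eq, msub, madd, mscale, toeplitz, opt_circ, opt_circ_coef, band; intros j l Hj Hl.
      rewrite !fourier_monomial. rewrite Zmod_small_signed by lia.
      set (z := (Z.of_nat j - Z.of_nat l)%Z). assert (Hz : (- Z.of_nat n < z < Z.of_nat n)%Z) by (unfold z; lia).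
      unfold cc, wc, wk. clearbody z.
      destruct (Z.ltb_spec k 0); destruct (Z.ltb_spec z 0);
      repeat match goal with |- context [Z.eqb ?a ?b] => destruct (Z.eqb_spec a b) end; try lia;
      repeat match goal with H : _ = _ |- _ => (subst z || subst k) end;
      rewrite ?Z.abs_eq, ?Z.abs_neq by lia; apply Cpair_eq; simpl;
      rewrite ?plus_IZR, ?minus_IZR, ?opp_IZR, ?HnZ; try field; auto.
    + apply low_rank_band. unfold cc. destruct (Z.ltb_spec k 0); lia.
    + eapply opnorm_mono; [|apply opnorm_band]. unfold wk. rewrite Cabs_scale. rewrite Rabs_right. unfold Rdiv; lra.
      apply Rle_ge. unfold Rdiv. apply Rmult_le_pos. apply IZR_le; lia. left; apply Rinv_0_lt_compat, lt_0_INR; lia. Qed.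

(** * Operator norms of Toeplitz and optimal circulant matrices *)

Lemma Nat_mod_lt_twice a n : (0 < n)%nat -> (a < 2 * n)%nat -> Nat.modulo a n = if Nat.ltb a n then a else (a - n)%nat.
Proof. intros. destruct (Nat.ltb_spec a n). apply Nat.mod_small; auto.
  symmetry. apply (Nat.mod_unique a n 1); lia. Qed.

Lemma Csum_rotate n l h : (l < n)%nat -> Csum n (fun s => h (Nat.modulo (l + s) n)) = Csum n h.
Proof. intros. assert (E1 : forall F, Csum n F = Csum ((n - l) + l) F) by (intros; f_equal; lia).
  assert (E2 : forall F, Csum n F = Csum (l + (n - l)) F) by (intros; f_equal; lia).
  rewrite E1, (E2 h), !Csum_split. rewrite Cadd_comm. f_equal.
  - apply Csum_ext; intros. rewrite Nat_mod_lt_twice by lia. destruct (Nat.ltb_spec (l + (n - l + i)) n); try lia. f_equal; lia.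
  - apply Csum_ext; intros. rewrite Nat_mod_lt_twice by lia. destruct (Nat.ltb_spec (l + i) n); try lia. auto. Qed.
Lemma Rsum_rotate n l h : (l < n)%nat -> Rsum n (fun s => h (Nat.modulo (l + s) n)) = Rsum n h.
Proof. intros. pose proof (Csum_rotate n l (fun i => RtoC (h i)) H). apply (f_equal fst) in H0.
  rewrite !Csum_fst in H0. simpl in H0. auto. Qed.

Lemma Csum_const m c : Csum m (fun _ => c) = Cscale (INR m) c.
Proof. induction m; simpl. cx_ring. rewrite IHm. destruct m; simpl; cx_ring. Qed.

(* The optimal circulant preconditioner averages A_n over the n simultaneous cyclic shifts of
   rows and columns; this is what bounds its norm by that of A_n. *)
Lemma opt_circ_rotation_average f n j l : (j < n)%nat -> (l < n)%nat ->
  opt_circ f n j l = Cscale (/ INR n) (Csum n (fun s => toeplitz f n (Nat.modulo (j + s) n) (Nat.modulo (l + s) n))).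
Proof. intros Hj Hl. set (D := if Nat.leb l j then (j - l)%nat else (j + n - l)%nat).
  assert (HD : (D < n)%nat) by (unfold D; destruct (Nat.leb_spec l j); lia).
  set (h := fun i => fourier f (Z.of_nat (Nat.modulo (i + D) n) - Z.of_nat i)).
  rewrite (Csum_ext n _ (fun s => h (Nat.modulo (l + s) n))).
  2: { intros s Hs. unfold toeplitz, h. f_equal. f_equal. f_equal.
       rewrite (Nat_mod_lt_twice (l + s) n) by lia. rewrite (Nat_mod_lt_twice (j + s) n) by lia.
       destruct (Nat.ltb_spec (l + s) n); rewrite Nat_mod_lt_twice by (try lia; unfold D; destruct (Nat.leb_spec l j); lia);
       unfold D; destruct (Nat.leb_spec l j);
       repeat match goal with |- context [Nat.ltb ?a ?b] => destruct (Nat.ltb_spec a b) end; lia. }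
  rewrite Csum_rotate by auto.
  assert (E1 : forall F, Csum n F = Csum ((n - D) + D) F) by (intros; f_equal; lia).
  rewrite (E1 h), Csum_split.
  rewrite (Csum_ext (n - D) _ (fun _ => fourier f (Z.of_nat D))).
  2: { intros i Hi. unfold h. rewrite Nat_mod_lt_twice by lia. destruct (Nat.ltb_spec (i + D) n); try lia. f_equal; lia. }
  rewrite (Csum_ext D _ (fun _ => fourier f (Z.of_nat D - Z.of_nat n))).
  2: { intros i Hi. unfold h. rewrite Nat_mod_lt_twice by lia. destruct (Nat.ltb_spec (n - D + i + D) n); try lia. f_equal; lia. }
  rewrite !Csum_const. unfold opt_circ, opt_circ_coef.
  assert (HZ : Z.modulo (Z.of_nat j - Z.of_nat l) (Z.of_nat n) = Z.of_nat D).
  { rewrite Zmod_small_signed by lia. unfold D. destruct (Nat.leb_spec l j); destruct (Z.ltb_spec (Z.of_nat j - Z.of_nat l) 0); lia. }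
  rewrite HZ. rewrite <- INR_IZR_INZ. rewrite minus_INR by lia. cx_ring. Qed.

Lemma Rsum_const m c : Rsum m (fun _ => c) = INR m * c.
Proof. induction m. simpl. ring. change (Rsum (S m) (fun _ => c)) with (Rsum m (fun _ => c) + c). rewrite IHm, S_INR; ring. Qed.

Definition mrot (n s : nat) (X : mat) : mat := fun j l => X (Nat.modulo (j + s) n) (Nat.modulo (l + s) n).

Lemma opnorm_mrot n s X c : (s < n)%nat -> opnorm_le n X c -> opnorm_le n (mrot n s X) c.
Proof. intros Hs HX x.
  set (x' := fun i => x (Nat.modulo (i + n - s) n)).
  assert (Hx' : forall l, (l < n)%nat -> x' (Nat.modulo (l + s) n) = x l).
  { intros. unfold x'. f_equal. rewrite (Nat_mod_lt_twice (l + s) n) by lia. destruct (Nat.ltb_spec (l + s) n).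
    rewrite Nat_mod_lt_twice by lia. destruct (Nat.ltb_spec (l + s + n - s) n); lia.
    rewrite Nat_mod_lt_twice by lia. destruct (Nat.ltb_spec (l + s - n + n - s) n); lia. }
  assert (E1 : vnorm n x' = vnorm n x).
  { rewrite !vnorm_eq. f_equal. rewrite <- (Rsum_rotate n s (fun i => Cnorm2 (x' i))) by auto.
    apply Rsum_ext; intros. rewrite Nat.add_comm, Hx'; auto. }
  assert (E2 : vnorm n (matvec n (mrot n s X) x) = vnorm n (matvec n X x')).
  { rewrite !vnorm_eq. f_equal. rewrite <- (Rsum_rotate n s (fun i => Cnorm2 (matvec n X x' i))) by auto.
    apply Rsum_ext; intros j Hj. f_equal. unfold matvec, mrot. rewrite <- (Csum_rotate n s (fun i => Cmul (X _ i) (x' i))) by auto.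
    apply Csum_ext; intros. rewrite (Nat.add_comm s i), Hx' by auto. rewrite Nat.add_comm; auto. }
  rewrite E2, <- E1. apply HX. Qed.

Lemma opnorm_opt_circ f n c : 0 <= c -> opnorm_le n (toeplitz f n) c -> opnorm_le n (opt_circ f n) c.
Proof. intros Hc HT. destruct n. apply opnorm_dim0.
  apply (opnorm_ext (S n) (mscale (/ INR (S n)) (msum (S n) (fun s => mrot (S n) s (toeplitz f (S n)))))).
  - unfold mat_eq; intros. rewrite opt_circ_rotation_average by auto. unfold mscale, msum, mrot. auto.
  - pose proof (lt_0_INR (S n) ltac:(lia)).
    replace c with (Rabs (/ INR (S n)) * Rsum (S n) (fun _ => c)).
    apply opnorm_scale, opnorm_msum. intros; apply opnorm_mrot; auto.
    rewrite Rabs_right by (apply Rle_ge; left; apply Rinv_0_lt_compat; auto).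
    rewrite Rsum_const. field; lra. Qed.

Definition trig_poly (n : nat) (x : vec) (t : R) : Cx := Csum n (fun k => Cmul (x k) (Cexpi (IZR (Z.of_nat k) * t))).

Lemma Ccont_trig_poly n x : Ccont (trig_poly n x).
Proof. unfold trig_poly. apply (Ccont_sum n (fun k t => Cmul (x k) (Cexpi (IZR (Z.of_nat k) * t)))).
  intros. apply Ccont_mul. apply Ccont_const. apply Ccont_expi_mul. Qed.

Lemma Cmul_sums n m A B : Cmul (Csum n A) (Csum m B) = Csum n (fun j => Csum m (fun k => Cmul (A j) (B k))).
Proof. rewrite <- Csum_mul_r. apply Csum_ext; intros. rewrite <- Csum_mul_l. auto. Qed.

Lemma Cint_pi_fourier g z : Ccont g -> Cint_pi (fun t => Cmul (g t) (Cexpi (- IZR z * t))) = Cscale (2 * PI) (fourier g z).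
Proof. intros. rewrite fourier_Cint_pi by auto. pose proof PI_RGT_0. cx_expand. apply Cpair_eq; simpl; field; lra. Qed.

Lemma Cint_pi_quad_form g n x y : Ccont g ->
  Cint_pi (fun t => Cmul (g t) (Cmul (Cconj (trig_poly n y t)) (trig_poly n x t))) =
  Csum n (fun j => Csum n (fun k => Cmul (Cmul (Cconj (y j)) (x k)) (Cscale (2 * PI) (fourier g (Z.of_nat j - Z.of_nat k))))).
Proof. intros Hg.
  rewrite (Cint_pi_ext _ (fun t => Csum n (fun j => Csum n (fun k => Cmul (Cmul (Cconj (y j)) (x k))
             (Cmul (g t) (Cexpi (- IZR (Z.of_nat j - Z.of_nat k) * t))))))).
  - rewrite Cint_pi_sum. apply Csum_ext; intros j Hj. rewrite Cint_pi_sum. apply Csum_ext; intros k Hk.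
    rewrite Cint_pi_cmul. rewrite Cint_pi_fourier; auto.
    apply Ccont_mul; auto. apply Ccont_expi_mul.
    intros. apply Ccont_mul. apply Ccont_const. apply Ccont_mul; auto. apply Ccont_expi_mul.
    intros. apply (Ccont_sum n (fun k t => Cmul (Cmul (Cconj (y i)) (x k)) (Cmul (g t) (Cexpi (- IZR (Z.of_nat i - Z.of_nat k) * t))))).
    intros. apply Ccont_mul. apply Ccont_const. apply Ccont_mul; auto. apply Ccont_expi_mul.
  - intros t. unfold trig_poly. rewrite Csum_conj, Cmul_sums. rewrite <- Csum_mul_l. apply Csum_ext; intros j Hj.
    rewrite <- Csum_mul_l. apply Csum_ext; intros k Hk.
    replace (Cconj (Cmul (y j) (Cexpi (IZR (Z.of_nat j) * t)))) with (Cmul (Cconj (y j)) (Cconj (Cexpi (IZR (Z.of_nat j) * t)))) by cx_ring.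
    rewrite Cexpi_conj.
    replace (Cexpi (- IZR (Z.of_nat j - Z.of_nat k) * t)) with (Cmul (Cexpi (- (IZR (Z.of_nat j) * t))) (Cexpi (IZR (Z.of_nat k) * t))).
    + generalize (Cexpi (- (IZR (Z.of_nat j) * t))) (Cexpi (IZR (Z.of_nat k) * t)). intros. cx_ring.
    + rewrite Cexpi_add. f_equal. rewrite minus_IZR. ring. Qed.

Lemma parseval n x : int_pi (fun t => Cnorm2 (trig_poly n x t)) = 2 * PI * Rsum n (fun j => Cnorm2 (x j)).
Proof. set (g1 := fun t => Cmul C1 (Cexpi (IZR 0 * t))).
  assert (Hg1 : forall t, g1 t = C1). { intros; unfold g1. rewrite Rmult_0_l. unfold Cexpi. rewrite cos_0, sin_0. cx_ring. }
  assert (Hc : Ccont g1) by (apply Ccont_mul; [apply Ccont_const|apply Ccont_expi_mul]).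
  pose proof (Cint_pi_quad_form g1 n x x Hc) as Q.
  apply (f_equal fst) in Q. change (fst (Cint_pi ?h)) with (int_pi (fun t => fst (h t))) in Q.
  rewrite (int_pi_ext _ (fun t => Cnorm2 (trig_poly n x t))) in Q.
  2: { intros. rewrite Hg1. unfold Cnorm2. destruct (trig_poly n x x0). unfold Cmul, Cconj, C1; simpl; ring. }
  rewrite Q. rewrite Csum_fst. rewrite <- Rsum_scal. apply Rsum_ext; intros j Hj.
  rewrite (Csum_ext n _ (fun k => if Nat.eqb k j then Cscale (2 * PI) (Cmul (Cconj (x j)) (x k)) else C0)).
  rewrite Csum_delta. destruct (Nat.ltb_spec j n); try lia. unfold Cnorm2. destruct (x j). unfold Cscale, Cmul, Cconj; simpl; ring.
  intros k Hk. unfold g1. rewrite fourier_monomial. destruct (Nat.eqb_spec k j); destruct (Z.eqb_spec (Z.of_nat j - Z.of_nat k) 0); try lia; subst; cx_ring. Qed.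

Lemma cont_Cnorm2 h : Ccont h -> continuity (fun t => Cnorm2 (h t)).
Proof. intros [A1 A2]. unfold Cnorm2. apply cont_plus; apply cont_mult; auto. Qed.

Lemma le_of_amgm a b eta : 0 <= a -> 0 <= b -> 0 <= eta ->
  (forall lam, 0 < lam -> b * b <= eta * (lam * (a * a) + b * b / lam) / 2) -> b <= eta * a.
Proof. intros Ha Hb He H. destruct (Req_dec b 0). subst; nra.
  destruct (Req_dec a 0).
  - subst. destruct (Req_dec eta 0). subst. specialize (H 1 ltac:(lra)). nra.
    specialize (H eta ltac:(lra)). replace (eta * (eta * (0 * 0) + b * b / eta) / 2) with (b * b / 2) in H by (field; auto). nra.
  - specialize (H (b / a) ltac:(apply Rdiv_lt_0_compat; lra)).
    replace (eta * (b / a * (a * a) + b * b / (b / a)) / 2) with (eta * a * b) in H by (field; lra). nra. Qed.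

(* With X, Y the trigonometric polynomials of x and y = A_n[g] x, ||y||^2 is the quadratic form
   (1/2 pi) int g conj(Y) X; bound |Y X| <= lam |X|^2 / 2 + |Y|^2 / (2 lam), use Parseval and
   optimise over lam. *)
Lemma opnorm_toeplitz g n eta : Ccont g -> 0 <= eta -> (forall t, - PI <= t <= PI -> Cabs (g t) <= eta) ->
  opnorm_le n (toeplitz g n) eta.
Proof. intros Hg He Hb x. set (y := matvec n (toeplitz g n) x).
  set (X := trig_poly n x). set (Y := trig_poly n y).
  assert (Q : Csum n (fun j => Cmul (Cconj (y j)) (y j)) = Cscale (/ (2 * PI)) (Cint_pi (fun t => Cmul (g t) (Cmul (Cconj (Y t)) (X t))))).
  { unfold X, Y. rewrite Cint_pi_quad_form by auto. rewrite <- Csum_scale. apply Csum_ext; intros j Hj.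
    unfold y at 2, matvec. rewrite <- Csum_mul_l, <- Csum_scale. apply Csum_ext; intros k Hk. unfold toeplitz.
    pose proof PI_RGT_0. generalize (fourier g (Z.of_nat j - Z.of_nat k)). intros. cx_expand. apply Cpair_eq; simpl; field; lra. }
  assert (Hyy : Rsum n (fun j => Cnorm2 (y j)) = fst (Csum n (fun j => Cmul (Cconj (y j)) (y j)))).
  { rewrite Csum_fst. apply Rsum_ext; intros. unfold Cnorm2. destruct (y i); simpl; ring. }
  assert (HcI : Ccont (fun t => Cmul (g t) (Cmul (Cconj (Y t)) (X t)))).
  { apply Ccont_mul; auto. apply Ccont_mul. apply Ccont_conj, Ccont_trig_poly. apply Ccont_trig_poly. }
  apply le_of_amgm; try apply vnorm_nonneg; auto.
  intros lam Hlam. rewrite !vnorm_eq. rewrite !sqrt_sqrt by apply Rsum_Cnorm2_nonneg.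
  rewrite Hyy at 1. rewrite Q. eapply Rle_trans; [apply Cfst_le_abs|]. rewrite Cabs_scale.
  pose proof PI_RGT_0.
  rewrite Rabs_right by (apply Rle_ge; left; apply Rinv_0_lt_compat; lra).
  eapply Rle_trans. apply Rmult_le_compat_l. left; apply Rinv_0_lt_compat; lra. apply Cint_pi_abs; auto.
  eapply Rle_trans. apply Rmult_le_compat_l. left; apply Rinv_0_lt_compat; lra.
  apply (int_pi_le _ (fun t => eta * (lam / 2 * Cnorm2 (X t) + / (2 * lam) * Cnorm2 (Y t)))).
  - apply Ccont_abs; auto.
  - apply cont_mult. apply cont_const. apply cont_plus; apply cont_mult; try apply cont_const;
    apply cont_Cnorm2, Ccont_trig_poly.
  - intros t Ht. rewrite !Cabs_mul, Cabs_conj. specialize (Hb t Ht).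
    rewrite <- (Cabs_sq (X t)), <- (Cabs_sq (Y t)).
    pose proof (Cabs_nonneg (X t)); pose proof (Cabs_nonneg (Y t)); pose proof (Cabs_nonneg (g t)).
    assert (Cabs (Y t) * Cabs (X t) <= lam / 2 * (Cabs (X t) * Cabs (X t)) + / (2 * lam) * (Cabs (Y t) * Cabs (Y t))).
    { assert (0 <= (lam * Cabs (X t) - Cabs (Y t)) ^ 2) by apply pow2_ge_0.
      apply (Rmult_le_reg_l (2 * lam)). lra.
      replace (2 * lam * (lam / 2 * (Cabs (X t) * Cabs (X t)) + / (2 * lam) * (Cabs (Y t) * Cabs (Y t))))
        with (lam * lam * (Cabs (X t) * Cabs (X t)) + Cabs (Y t) * Cabs (Y t)) by (field; lra). nra. }
    assert (0 <= Cabs (Y t) * Cabs (X t)) by nra. nra.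
  - assert (CX : continuity (fun t => Cnorm2 (X t))) by (apply cont_Cnorm2, Ccont_trig_poly).
    assert (CY : continuity (fun t => Cnorm2 (Y t))) by (apply cont_Cnorm2, Ccont_trig_poly).
    rewrite int_pi_scal, int_pi_plus, int_pi_scal, int_pi_scal; auto; try (apply cont_mult; auto; apply cont_const).
    unfold X, Y. rewrite !parseval. right. field. lra.
    apply cont_plus; apply cont_mult; auto; apply cont_const. Qed.

(** * Fejer means *)

(* [fejer_kernel M] is M times the Fejer kernel; [fejer_mean f M] is the Fejer mean sigma_M f. *)
Definition fejer_kernel (M : nat) (u : R) : Cx := Csum M (fun j => Csum M (fun l => Cexpi (IZR (Z.of_nat j - Z.of_nat l) * u))).
Definition expi_geom_sum (M : nat) (u : R) : Cx := Csum M (fun j => Cexpi (INR j * u)).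
Definition fejer_mean (f : R -> Cx) (M : nat) (x : R) : Cx :=
  Csum M (fun j => Csum M (fun l => Cmul (Cscale (/ INR M) (fourier f (Z.of_nat j - Z.of_nat l))) (Cexpi (IZR (Z.of_nat j - Z.of_nat l) * x)))).

Lemma IZR_sub_nat j l : IZR (Z.of_nat j - Z.of_nat l) = INR j - INR l.
Proof. rewrite minus_IZR, <- !INR_IZR_INZ; auto. Qed.

Lemma fejer_kernel_Cnorm2 M u : fejer_kernel M u = RtoC (Cnorm2 (expi_geom_sum M u)).
Proof. transitivity (Cmul (expi_geom_sum M u) (Cconj (expi_geom_sum M u))).
  - unfold fejer_kernel, expi_geom_sum. rewrite Csum_conj, Cmul_sums. apply Csum_ext; intros j Hj. apply Csum_ext; intros l Hl.
    rewrite Cexpi_conj, Cexpi_add, IZR_sub_nat. f_equal; ring.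
  - destruct (expi_geom_sum M u). unfold Cmul, Cconj, RtoC, Cnorm2; simpl. apply Cpair_eq; simpl; ring. Qed.

Lemma Cnorm2_expi_m1 a : Cnorm2 (Cadd (Cexpi a) (Copp C1)) = 2 - 2 * cos a.
Proof. unfold Cnorm2, Cexpi, Cadd, Copp, C1; simpl. pose proof (sin2_cos2 a). unfold Rsqr in H. nra. Qed.

Lemma expi_geom_sum_telescope M u : Cmul (Cadd (Cexpi u) (Copp C1)) (expi_geom_sum M u) = Cadd (Cexpi (INR M * u)) (Copp C1).
Proof. induction M. unfold expi_geom_sum; simpl. rewrite Rmult_0_l. unfold Cexpi. rewrite cos_0, sin_0. cx_ring.
  unfold expi_geom_sum in *. simpl Csum. rewrite Cmul_add_r, IHM.
  replace (Cmul (Cadd (Cexpi u) (Copp C1)) (Cexpi (INR M * u))) with (Cadd (Cmul (Cexpi u) (Cexpi (INR M * u))) (Copp (Cexpi (INR M * u)))) by cx_ring.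
  rewrite Cexpi_add. rewrite S_INR. replace (u + INR M * u) with ((INR M + 1) * u) by ring. cx_ring. Qed.

Lemma expi_geom_sum_bound M u : Cnorm2 (expi_geom_sum M u) * (2 - 2 * cos u) <= 4.
Proof. pose proof (expi_geom_sum_telescope M u). apply (f_equal Cnorm2) in H. rewrite Cnorm2_mul, !Cnorm2_expi_m1 in H.
  pose proof (COS_bound (INR M * u)). lra. Qed.

Lemma Ccont_fejer_kernel_shift M x : Ccont (fun t => fejer_kernel M (x - t)).
Proof. unfold fejer_kernel. apply (Ccont_sum M (fun j t => Csum M (fun l => Cexpi (IZR (Z.of_nat j - Z.of_nat l) * (x - t))))).
  intros. apply (Ccont_sum M (fun l t => Cexpi (IZR (Z.of_nat i - Z.of_nat l) * (x - t)))). intros.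
  apply (Ccont_ext (fun t => Cexpi ((- IZR (Z.of_nat i - Z.of_nat i0)) * t + IZR (Z.of_nat i - Z.of_nat i0) * x))).
  intros; f_equal; ring. apply Ccont_expi_affine. Qed.

Lemma expi_shift z x t : Cexpi (IZR z * (x - t)) = Cmul (Cexpi (IZR z * x)) (Cexpi (- IZR z * t)).
Proof. rewrite Cexpi_add. f_equal; ring. Qed.

Lemma Cint_pi_fejer_kernel_mul f M x : Ccont f -> (0 < M)%nat ->
  Cint_pi (fun t => Cmul (f t) (fejer_kernel M (x - t))) = Cscale (2 * PI * INR M) (fejer_mean f M x).
Proof. intros Hf HM. unfold fejer_kernel.
  rewrite (Cint_pi_ext _ (fun t => Csum M (fun j => Csum M (fun l => Cmul (Cexpi (IZR (Z.of_nat j - Z.of_nat l) * x))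
       (Cmul (f t) (Cexpi (- IZR (Z.of_nat j - Z.of_nat l) * t))))))).
  - rewrite Cint_pi_sum. unfold fejer_mean. rewrite <- Csum_scale. apply Csum_ext; intros j Hj.
    rewrite Cint_pi_sum. rewrite <- Csum_scale. apply Csum_ext; intros l Hl. rewrite Cint_pi_cmul, Cint_pi_fourier; auto.
    pose proof (lt_0_INR M HM). generalize (fourier f (Z.of_nat j - Z.of_nat l)) (Cexpi (IZR (Z.of_nat j - Z.of_nat l) * x)).
    intros. cx_expand. apply Cpair_eq; simpl; field; lra.
    apply Ccont_mul; auto; apply Ccont_expi_mul.
    intros. apply Ccont_mul. apply Ccont_const. apply Ccont_mul; auto; apply Ccont_expi_mul.
    intros. apply (Ccont_sum M (fun l t => Cmul (Cexpi (IZR (Z.of_nat i - Z.of_nat l) * x)) (Cmul (f t) (Cexpi (- IZR (Z.of_nat i - Z.of_nat l) * t))))).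
    intros. apply Ccont_mul. apply Ccont_const. apply Ccont_mul; auto; apply Ccont_expi_mul.
  - intros t. rewrite <- Csum_mul_l. apply Csum_ext; intros j Hj. rewrite <- Csum_mul_l. apply Csum_ext; intros l Hl.
    rewrite expi_shift. generalize (Cexpi (IZR (Z.of_nat j - Z.of_nat l) * x)) (Cexpi (- IZR (Z.of_nat j - Z.of_nat l) * t)). intros. cx_ring. Qed.

Lemma Cint_pi_fejer_kernel M x : Cint_pi (fun t => fejer_kernel M (x - t)) = RtoC (2 * PI * INR M).
Proof. unfold fejer_kernel.
  rewrite (Cint_pi_ext _ (fun t => Csum M (fun j => Csum M (fun l => Cmul (Cexpi (IZR (Z.of_nat j - Z.of_nat l) * x))
       (Cexpi (IZR (- (Z.of_nat j - Z.of_nat l)) * t)))))).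
  - rewrite Cint_pi_sum. rewrite (Csum_ext M _ (fun j => RtoC (2 * PI))).
    rewrite Csum_const. cx_ring.
    intros j Hj. rewrite Cint_pi_sum. rewrite (Csum_ext M _ (fun l => if Nat.eqb l j then RtoC (2 * PI) else C0)).
    rewrite Csum_delta. destruct (Nat.ltb_spec j M); auto; lia.
    intros l Hl. rewrite Cint_pi_cmul, Cint_pi_expi by apply Ccont_expi_mul. destruct (Nat.eqb_spec l j); destruct (Z.eqb_spec (- (Z.of_nat j - Z.of_nat l)) 0); try lia.
    subst. rewrite Z.sub_diag. simpl. rewrite Rmult_0_l. unfold Cexpi; rewrite cos_0, sin_0. cx_ring. cx_ring.
    intros. apply Ccont_mul. apply Ccont_const. apply Ccont_expi_mul.
    intros. apply (Ccont_sum M (fun l t => Cmul (Cexpi (IZR (Z.of_nat i - Z.of_nat l) * x)) (Cexpi (IZR (- (Z.of_nat i - Z.of_nat l)) * t)))).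
    intros. apply Ccont_mul. apply Ccont_const. apply Ccont_expi_mul.
  - intros t. apply Csum_ext; intros j Hj. apply Csum_ext; intros l Hl. rewrite expi_shift, opp_IZR. auto. Qed.

Lemma cos_le_away_from_2PIZ u d : 0 < d <= PI -> - (2 * PI) <= u <= 2 * PI -> d <= Rabs u -> d <= Rabs (u - 2 * PI) -> d <= Rabs (u + 2 * PI) ->
  cos u <= cos d.
Proof. intros Hd Hu H1 H2 H3.
  assert (Hpos : forall v, d <= v <= 2 * PI - d -> cos v <= cos d).
  { intros v Hv. destruct (Rle_dec v PI).
    - destruct (Req_dec v d). subst; lra. left; apply cos_decreasing_1; lra.
    - replace (cos v) with (cos (2 * PI - v)). destruct (Req_dec (2 * PI - v) d). rewrite H; lra.
      left; apply cos_decreasing_1; lra. rewrite cos_minus, cos_2PI, sin_2PI. ring. }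
  destruct (Rle_dec 0 u).
  - apply Hpos. rewrite Rabs_right in H1 by lra. rewrite Rabs_left1 in H2 by lra. lra.
  - rewrite <- cos_neg. apply Hpos. rewrite Rabs_left in H1 by lra. rewrite Rabs_right in H3 by lra. lra. Qed.

Lemma C2pi_Ccont f : in_C2pi f -> Ccont f.
Proof. intros [_ [H1 H2]]; split; auto. Qed.

Lemma C2pi_bounded f : in_C2pi f -> exists B, 0 <= B /\ forall t, - PI <= t <= PI -> Cabs (f t) <= B.
Proof.
  intros Hf. pose proof PI_RGT_0.
  destruct (continuity_ab_maj (fun t => Cabs (f t)) (- PI) PI ltac:(lra)
              (fun c _ => Ccont_abs f (C2pi_Ccont f Hf) c)) as [t0 [Ht0 _]].
  exists (Cabs (f t0)). split; [apply Cabs_nonneg | exact Ht0].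
Qed.

Lemma C2pi_uniform_continuity f eps : in_C2pi f -> 0 < eps -> exists d, 0 < d <= PI /\
  forall a b, - (3 * PI) <= a <= 3 * PI -> - (3 * PI) <= b <= 3 * PI -> Rabs (a - b) < d ->
    Cabs (Cadd (f a) (Copp (f b))) <= eps.
Proof.
  intros [_ [Hf1 Hf2]] Heps. pose proof PI_RGT_0.
  destruct (Heine_cor2 (f := fun t => fst (f t)) (a := - (3 * PI)) (b := 3 * PI) (fun x _ => Hf1 x)
              (mkposreal (eps / 2) ltac:(lra))) as [d1 Hd1].
  destruct (Heine_cor2 (f := fun t => snd (f t)) (a := - (3 * PI)) (b := 3 * PI) (fun x _ => Hf2 x)
              (mkposreal (eps / 2) ltac:(lra))) as [d2 Hd2].
  pose proof (cond_pos d1); pose proof (cond_pos d2).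
  pose proof (Rmin_l (Rmin d1 d2) PI); pose proof (Rmin_r (Rmin d1 d2) PI).
  pose proof (Rmin_l d1 d2); pose proof (Rmin_r d1 d2).
  exists (Rmin (Rmin d1 d2) PI). split.
  - split; [apply Rmin_pos; [apply Rmin_pos|]|]; lra.
  - intros a b Ha Hb Hab. eapply Rle_trans; [apply Cabs_le_fst_snd|]. simpl.
    pose proof (Hd1 a b Ha Hb ltac:(lra)); pose proof (Hd2 a b Ha Hb ltac:(lra)).
    simpl in *. unfold Rminus in *. lra.
Qed.

Lemma fejer_mean_sub f M x : Ccont f -> (0 < M)%nat ->
  Cadd (f x) (Copp (fejer_mean f M x)) =
  Cscale (/ (2 * PI * INR M)) (Cint_pi (fun t => Cmul (Cadd (f x) (Copp (f t))) (fejer_kernel M (x - t)))).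
Proof.
  intros Hf HM. pose proof PI_RGT_0. pose proof (lt_0_INR M HM).
  pose proof (Ccont_fejer_kernel_shift M x) as HK.
  rewrite (Cint_pi_ext _ (fun t => Cadd (Cmul (f x) (fejer_kernel M (x - t)))
                                        (Cscale (-1) (Cmul (f t) (fejer_kernel M (x - t))))))
    by (intros; cx_ring).
  rewrite Cint_pi_add, Cint_pi_scale, Cint_pi_cmul, Cint_pi_fejer_kernel, Cint_pi_fejer_kernel_mul; auto.
  - generalize (f x) (fejer_mean f M x). intros. cx_expand. apply Cpair_eq; simpl; field; lra.
  - apply Ccont_mul; auto.
  - apply Ccont_mul; auto. apply Ccont_const.
  - apply Ccont_scale, Ccont_mul; auto.
Qed.

(* Near the diagonal (mod 2 PI) the increment of f is small; away from it the kernel is small. *)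
Lemma fejer_integrand_le f B eps d M x t : (forall s, f (s + 2 * PI) = f s) ->
  (forall s, - PI <= s <= PI -> Cabs (f s) <= B) -> 0 < d <= PI ->
  (forall a b, - (3 * PI) <= a <= 3 * PI -> - (3 * PI) <= b <= 3 * PI -> Rabs (a - b) < d ->
     Cabs (Cadd (f a) (Copp (f b))) <= eps) ->
  - PI <= x <= PI -> - PI <= t <= PI ->
  Cabs (Cadd (f x) (Copp (f t))) * Cnorm2 (expi_geom_sum M (x - t)) <=
  eps * Cnorm2 (expi_geom_sum M (x - t)) + 8 * B / (2 - 2 * cos d).
Proof.
  intros Hper Hb Hd Huc Hx Ht. pose proof PI_RGT_0.
  set (cd := 2 - 2 * cos d).
  assert (Hcd : 0 < cd).
  { unfold cd. assert (cos d < cos 0) by (apply cos_decreasing_1; lra). rewrite cos_0 in H0; lra. }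
  set (S := Cnorm2 (expi_geom_sum M (x - t))). assert (HS : 0 <= S) by apply Cnorm2_nonneg.
  set (D := Cabs (Cadd (f x) (Copp (f t)))).
  assert (HD : 0 <= D <= 2 * B).
  { split; [apply Cabs_nonneg|]. unfold D. eapply Rle_trans; [apply Cabs_triangle|].
    rewrite Cabs_opp. pose proof (Hb x Hx); pose proof (Hb t Ht). lra. }
  assert (HB : 0 <= B) by (pose proof (Hb t Ht); pose proof (Cabs_nonneg (f t)); lra).
  destruct (classic (Rabs (x - t) < d \/ Rabs (x - t - 2 * PI) < d \/ Rabs (x - t + 2 * PI) < d))
    as [Hnear|Hfar].
  - assert (D <= eps).
    { unfold D. destruct Hnear as [Hn|[Hn|Hn]].
      + apply Huc; lra.
      + rewrite <- (Hper t). apply Huc; try lra. replace (x - (t + 2 * PI)) with (x - t - 2 * PI) by ring; auto.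
      + replace (f t) with (f (t - 2 * PI)) by (rewrite <- (Hper (t - 2 * PI)); f_equal; ring).
        apply Huc; try lra. replace (x - (t - 2 * PI)) with (x - t + 2 * PI) by ring; auto. }
    assert (0 <= 8 * B / cd) by (unfold Rdiv; apply Rmult_le_pos; [lra | left; apply Rinv_0_lt_compat; lra]).
    assert (D * S <= eps * S) by (apply Rmult_le_compat_r; auto). lra.
  - assert (cos (x - t) <= cos d) by (apply cos_le_away_from_2PIZ; auto; lra).
    pose proof (expi_geom_sum_bound M (x - t)) as Hgeom. fold S in Hgeom.
    assert (S <= 4 / cd).
    { apply (Rmult_le_reg_r cd); auto. unfold Rdiv; rewrite Rmult_assoc, Rinv_l by lra. unfold cd in *. nra. }
    assert (D * S <= 2 * B * (4 / cd)) by (apply Rmult_le_compat; lra).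
    assert (0 <= eps * S).
    { apply Rmult_le_pos; auto. pose proof (Huc x x ltac:(lra) ltac:(lra) ltac:(rewrite Rminus_diag, Rabs_R0; lra)).
      pose proof (Cabs_nonneg (Cadd (f x) (Copp (f x)))). lra. }
    replace (8 * B / cd) with (2 * B * (4 / cd)) by (field; lra). lra.
Qed.

Lemma fejer_mean_approx f eta : in_C2pi f -> 0 < eta -> exists M, (0 < M)%nat /\
  forall x, - PI <= x <= PI -> Cabs (Cadd (f x) (Copp (fejer_mean f M x))) <= eta.
Proof.
  intros Hf Heta. pose proof PI_RGT_0. pose proof (C2pi_Ccont f Hf) as Hc.
  destruct (C2pi_bounded f Hf) as [B [HB Hb]].
  destruct (C2pi_uniform_continuity f (eta / 2) Hf ltac:(lra)) as [d [Hd Huc]].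
  set (cd := 2 - 2 * cos d).
  assert (Hcd : 0 < cd).
  { unfold cd. assert (cos d < cos 0) by (apply cos_decreasing_1; lra). rewrite cos_0 in H0; lra. }
  assert (H16 : 0 <= 16 * B / (eta * cd))
    by (unfold Rdiv; apply Rmult_le_pos; [lra | left; apply Rinv_0_lt_compat; nra]).
  destruct (INR_unbounded (16 * B / (eta * cd))) as [M HM].
  assert (HM0 : (0 < M)%nat) by (destruct M; [simpl in HM; lra | lia]).
  pose proof (lt_0_INR M HM0).
  exists M. split; auto. intros x Hx.
  set (I := fun t => Cmul (Cadd (f x) (Copp (f t))) (fejer_kernel M (x - t))).
  pose proof (Ccont_fejer_kernel_shift M x) as HK.
  assert (HcI : Ccont I) by (apply Ccont_mul; auto; apply Ccont_add; [apply Ccont_const | apply Ccont_opp; auto]).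
  assert (HRK : int_pi (fun t => fst (fejer_kernel M (x - t))) = 2 * PI * INR M).
  { change (int_pi (fun t => fst (fejer_kernel M (x - t))))
      with (fst (Cint_pi (fun t => fejer_kernel M (x - t)))).
    rewrite Cint_pi_fejer_kernel; auto. }
  rewrite fejer_mean_sub, Cabs_scale by auto.
  rewrite Rabs_right by (apply Rle_ge; left; apply Rinv_0_lt_compat; nra).
  eapply Rle_trans; [apply Rmult_le_compat_l; [left; apply Rinv_0_lt_compat; nra | apply Cint_pi_abs; auto]|].
  eapply Rle_trans; [apply Rmult_le_compat_l; [left; apply Rinv_0_lt_compat; nra|]|].
  - apply (int_pi_le _ (fun t => eta / 2 * fst (fejer_kernel M (x - t)) + 8 * B / cd)).
    + apply Ccont_abs; auto.
    + apply cont_plus; [apply cont_mult; [apply cont_const | apply HK] | apply cont_const].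
    + intros t Ht. unfold I. rewrite Cabs_mul, fejer_kernel_Cnorm2, Cabs_RtoC. simpl fst.
      rewrite Rabs_right by (apply Rle_ge, Cnorm2_nonneg).
      apply fejer_integrand_le; auto. apply Hf.
  - rewrite int_pi_plus, int_pi_scal, int_pi_const, HRK;
      [| apply HK | apply cont_mult; [apply cont_const | apply HK] | apply cont_const].
    assert (8 * B / cd / INR M <= eta / 2).
    { apply (Rmult_le_reg_r (INR M)); auto. unfold Rdiv at 1. rewrite Rmult_assoc, Rinv_l, Rmult_1_r by lra.
      apply (Rmult_le_reg_r (2 / eta)); [apply Rdiv_lt_0_compat; lra|].
      replace (8 * B / cd * (2 / eta)) with (16 * B / (eta * cd)) by (field; lra).
      replace (eta / 2 * INR M * (2 / eta)) with (INR M) by (field; lra). lra. }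
    replace (/ (2 * PI * INR M) * (eta / 2 * (2 * PI * INR M) + 2 * PI * (8 * B / cd)))
      with (eta / 2 + 8 * B / cd / INR M) by (field; lra). lra.
Qed.

Lemma fejer_mean_toeplitz_circ_close f M B : Ccont f -> 0 <= B -> (forall t, - PI <= t <= PI -> Cabs (f t) <= B) -> (0 < M)%nat ->
  toeplitz_circ_close (fejer_mean f M) (M * (M * M)) (INR M * (INR M * (B * INR M))).
Proof. intros Hf HB Hb HM. unfold fejer_mean.
  apply (toeplitz_circ_close_sum M (fun j t => Csum M (fun l =>
           Cmul (Cscale (/ INR M) (fourier f (Z.of_nat j - Z.of_nat l))) (Cexpi (IZR (Z.of_nat j - Z.of_nat l) * t))))).
  intros j Hj.
  apply (toeplitz_circ_close_sum M (fun l t => Cmul (Cscale (/ INR M) (fourier f (Z.of_nat j - Z.of_nat l))) (Cexpi (IZR (Z.of_nat j - Z.of_nat l) * t)))).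
  intros l Hl. eapply toeplitz_circ_close_mono; [| |apply toeplitz_circ_close_monomial]. lia.
  pose proof (lt_0_INR M HM). assert (1 <= INR M) by (apply (le_INR 1); lia).
  rewrite Cabs_scale. rewrite Rabs_right by (apply Rle_ge; left; apply Rinv_0_lt_compat; lra).
  pose proof (Cabs_fourier_le f B Hf Hb (Z.of_nat j - Z.of_nat l)).
  assert (IZR (Z.abs (Z.of_nat j - Z.of_nat l)) <= INR M). { rewrite INR_IZR_INZ. apply IZR_le. lia. }
  assert (0 <= IZR (Z.abs (Z.of_nat j - Z.of_nat l))) by (apply IZR_le; lia).
  assert (/ INR M <= 1). { rewrite <- Rinv_1. apply Rinv_le_contravar; lra. }
  assert (0 < / INR M) by (apply Rinv_0_lt_compat; lra).
  pose proof (Cabs_nonneg (fourier f (Z.of_nat j - Z.of_nat l))).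
  assert (/ INR M * Cabs (fourier f (Z.of_nat j - Z.of_nat l)) <= B) by nra.
  apply Rmult_le_compat; auto. apply Rmult_le_pos; lra. Qed.

Lemma toeplitz_sub_opt_circ_split f e : in_C2pi f -> 0 < e -> exists (r N : nat), forall n, (N < n)%nat ->
  exists R E, mat_eq n (msub (toeplitz f n) (opt_circ f n)) (madd R E) /\
    low_rank n R r /\ opnorm_le n E e.
Proof.
  intros Hf He. pose proof (C2pi_Ccont f Hf) as Hc.
  destruct (C2pi_bounded f Hf) as [a [Ha Hfa]].
  set (eta := e / 3).
  destruct (fejer_mean_approx f eta Hf ltac:(unfold eta; lra)) as [M [HM Happ]].
  set (p := fejer_mean f M). set (g := fun t => Cadd (f t) (Copp (p t))).
  destruct (fejer_mean_toeplitz_circ_close f M a Hc Ha Hfa HM) as [Hpc [Hcp HGn]]. fold p in Hpc, HGn.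
  set (cp := INR M * (INR M * (a * INR M))) in *.
  assert (Hgc : Ccont g) by (apply Ccont_add; auto; apply Ccont_opp; auto).
  assert (Hfpg : f = fun t => Cadd (p t) (g t)) by (extensionality t; unfold g; cx_ring).
  destruct (INR_unbounded (3 * cp / e)) as [N HN].
  exists (M * (M * M))%nat, N. intros n Hn.
  assert (HnN : INR N < INR n) by (apply lt_INR; lia). pose proof (pos_INR N).
  destruct (HGn n) as [R [Ep [HRE [HR HEp]]]].
  exists R, (madd Ep (msub (toeplitz g n) (opt_circ g n))). split; [|split; [exact HR|]].
  - rewrite Hfpg, toeplitz_add, opt_circ_add by auto.
    intros j k Hj Hk. specialize (HRE j k Hj Hk). unfold msub, madd, mscale in *.
    transitivity (Cadd (Cadd (toeplitz p n j k) (Cscale (-1) (opt_circ p n j k)))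
                       (Cadd (toeplitz g n j k) (Cscale (-1) (opt_circ g n j k)))); [cx_ring|].
    rewrite HRE. cx_ring.
  - assert (Hg : forall t, - PI <= t <= PI -> Cabs (g t) <= eta) by (intros; apply Happ; auto).
    assert (Heta : 0 <= eta) by (unfold eta; lra).
    apply opnorm_mono with (cp / INR n + (eta + eta)).
    + assert (cp / INR n <= eta).
      { apply (Rmult_le_reg_r (INR n)); [lra|].
        unfold Rdiv at 1. rewrite Rmult_assoc, Rinv_l, Rmult_1_r by lra.
        apply (Rmult_le_reg_r (3 / e)); [apply Rdiv_lt_0_compat; lra|].
        replace (cp * (3 / e)) with (3 * cp / e) by (field; lra).
        unfold eta. replace (e / 3 * INR n * (3 / e)) with (INR n) by (field; lra). lra. }
      unfold eta in *. lra.
    + apply opnorm_add; [exact HEp|]. apply opnorm_sub.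
      * apply opnorm_toeplitz; auto.
      * apply opnorm_opt_circ, opnorm_toeplitz; auto.
Qed.

Theorem mainTheorem6 (f : R -> Cx) (Cst : R) :
  in_C2pi f ->
  (forall n : nat, exists B : mat,
     is_inverse n (msin n (opt_circ f n)) B /\ opnorm_le n B Cst) ->
  forall eps : R, eps > 0 ->
  exists N M : nat, (0 < N)%nat /\ (0 < M)%nat /\
    forall n : nat, (n > N)%nat ->
    forall B : mat, is_inverse n (msin n (opt_circ f n)) B ->
    exists Rh Eh : mat,
      mat_eq n (mmul n B (msin n (toeplitz f n))) (madd mid (madd Rh Eh)) /\
      rank_le n Rh (2 * M) /\
      opnorm_le n Eh eps.
Proof.
  intros Hf Hinv eps Heps. pose proof (C2pi_Ccont f Hf) as Hc.
  destruct (C2pi_bounded f Hf) as [a [Ha Hfa]].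
  assert (HCst : 0 <= Cst) by (destruct (Hinv 1%nat) as [B1 [_ HB1]]; eapply opnorm_nonneg; eauto).
  destruct (msin_perturb_small a (eps / (Cst + 1)) Ha ltac:(apply Rdiv_lt_0_compat; lra))
    as [d [delta [Hdelta Hsin]]].
  destruct (toeplitz_sub_opt_circ_split f delta Hf Hdelta) as [r [N HN]].
  exists (S N), (d * (2 * d + 1) * r + 1)%nat. split; [lia | split; [lia|]].
  intros n Hn B HB.
  destruct (HN n ltac:(lia)) as [R0 [E0 [HD [HR0 HE0]]]].
  destruct (Hsin n (toeplitz f n) (opt_circ f n) r R0 E0) as [R [E [HS [HR HE]]]]; auto.
  { apply opnorm_toeplitz; auto. }
  { apply opnorm_opt_circ, opnorm_toeplitz; auto. }
  destruct (Hinv n) as [B0 [HB0 HB0n]].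
  assert (HBn : opnorm_le n B Cst) by (eapply opnorm_ext; [exact (is_inverse_unique _ _ _ _ HB HB0) | exact HB0n]).
  exists (mmul n B R), (mmul n B E). split; [|split].
  - eapply mat_eq_trans; [apply mmul_ext; [apply mat_eq_refl | apply msub_madd_eq; exact HS]|].
    rewrite !mmul_madd_r. apply madd_ext; [apply (proj1 HB) | apply mat_eq_refl].
  - apply rank_le_of_low_rank, low_rank_mul_l, low_rank_mono with (d * (2 * d + 1) * r)%nat; auto. lia.
  - apply opnorm_mono with (Cst * (eps / (Cst + 1))); [|apply opnorm_mul; auto].
    apply (Rmult_le_reg_r (Cst + 1)); [lra|].
    replace (Cst * (eps / (Cst + 1)) * (Cst + 1)) with (Cst * eps) by (field; lra). nra.
Qed.
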